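(* Let $s>0$. There exist $\delta=\delta(s)>0$ and $C=C(s)$ such that for all $M\ge1$, $T>0$ and $\omega,\tilde\omega\in C([0,T];\ell^2_s(\mathbb Z))$, $$\|\mathcal N_0[\omega]\|_{C_T\ell^2_s}\le CM^{-\delta}\|\omega\|_{C_T\ell^2_s}^3,\qquad \|\mathcal N_0[\omega]-\mathcal N_0[\tilde\omega]\|_{C_T\ell^2_s}\le CM^{-\delta}\big(\|\omega\|_{C_T\ell^2_s}^2+\|\tilde\omega\|_{C_T\ell^2_s}^2\big)\|\omega-\tilde\omega\|_{C_T\ell^2_s}.$$
   Context: $\langle n\rangle=(1+n^2)^{1/2}$, $\|\omega\|_{\ell^2_s}=\|\langle\cdot\rangle^s\omega\|_{\ell^2}$, $C_T\ell^2_s:=C([0,T];\ell^2_s(\mathbb Z))$ with sup-in-time norm, $\omega^*(n):=\overline{\omega(-n)}$. Notation $n_{ij\ldots}=n_i+n_j+\cdots$, $\hat n:=n-i\mathbf 1_{\{n=0\}}$; for $n=n_{123}$: $m_1:=2i\frac{nn_{23}}{\hat n_1\hat n_2}\mathbf 1_{\{n>0\}}\mathbf 1_{\{n_{23}<0\}}\mathbf 1_{\{n_3\ne0\}}$, $\tilde m_1:=m_1\mathbf 1_{\{n_{12}n_{13}\ne0\}}$, $\Phi:=n|n|-n_1|n_1|-n_2|n_2|-n_3|n_3|$. For $M>0$, $t\in[0,T]$: $$\mathcal N_0[\omega](t,n):=-i\sum_{n=n_{123},\ |\Phi|> M}\frac{e^{it\Phi}\tilde m_1(n,n_1,n_2,n_3)}{\Phi}\,\omega(t,n_1)\omega(t,n_2)\omega^*(t,n_3)\quad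 (n>0),$$ and $\mathcal N_0[\omega](t,n):=0$ for $n\le0$. *)

From Stdlib Require Import Reals ZArith ClassicalEpsilon.
Open Scope R_scope.

Definition Cx : Type := (R * R)%type.
Definition RtoC (r : R) : Cx := (r, 0).
Definition C0 : Cx := (0, 0).
Definition Ci : Cx := (0, 1).
Definition Cadd (z w : Cx) : Cx := (fst z + fst w, snd z + snd w).
Definition Copp (z : Cx) : Cx := (- fst z, - snd z).
Definition Csub (z w : Cx) : Cx := Cadd z (Copp w).
Definition Cmul (z w : Cx) : Cx :=
  (fst z * fst w - snd z * snd w, fst z * snd w + snd z * fst w).
Definition Cmod2 (z : Cx) : R := fst z ^ 2 + snd z ^ 2.
Definition Cinv (z : Cx) : Cx := (fst z / Cmod2 z, - snd z / Cmod2 z).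
Definition Cdiv (z w : Cx) : Cx := Cmul z (Cinv w).
Definition Cconj (z : Cx) : Cx := (fst z, - snd z).
Definition Cexpi (theta : R) : Cx := (cos theta, sin theta).

Definition Rlub (E : R -> Prop) : R := epsilon (inhabits 0) (is_lub E).

Definition jbr (n : Z) : R := sqrt (1 + IZR n ^ 2).

(* sum_{|n| <= N} <n>^{2s} |f n|^2 *)
Definition l2s_partial (s : R) (f : Z -> Cx) (N : nat) : R :=
  sum_f_R0 (fun k => (Rpower (jbr (Z.of_nat k - Z.of_nat N)%Z) s) ^ 2
                     * Cmod2 (f (Z.of_nat k - Z.of_nat N)%Z)) (2 * N).

Definition in_l2s (s : R) (f : Z -> Cx) : Prop :=
  exists B, forall N, l2s_partial s f N <= B.

Definition l2s_norm (s : R) (f : Z -> Cx) : R :=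
  sqrt (Rlub (fun x => exists N, x = l2s_partial s f N)).

Definition in_CTl2s (s T : R) (w : R -> Z -> Cx) : Prop :=
  (forall t, 0 <= t <= T -> in_l2s s (w t)) /\
  (forall t, 0 <= t <= T -> forall eps, 0 < eps -> exists eta, 0 < eta /\
     forall t', 0 <= t' <= T -> Rabs (t - t') < eta ->
       l2s_norm s (fun n => Csub (w t n) (w t' n)) < eps).

Definition CTnorm (s T : R) (w : R -> Z -> Cx) : R :=
  Rlub (fun x => exists t, 0 <= t <= T /\ x = l2s_norm s (w t)).

(* square partial sums over [-K,K]^2 *)
Definition sq_partial (f : Z -> Z -> Cx) (K : nat) : Cx :=
  let g := fun i j => f (Z.of_nat i - Z.of_nat K)%Z (Z.of_nat j - Z.of_nat K)%Z in
  (sum_f_R0 (fun i => sum_f_R0 (fun j => fst (g i j)) (2 * K)) (2 * K),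
   sum_f_R0 (fun i => sum_f_R0 (fun j => snd (g i j)) (2 * K)) (2 * K)).

Definition Csum2 (f : Z -> Z -> Cx) : Cx :=
  epsilon (inhabits C0) (fun L =>
    Un_cv (fun K => fst (sq_partial f K)) (fst L) /\
    Un_cv (fun K => snd (sq_partial f K)) (snd L)).

Definition ind (b : bool) : R := if b then 1 else 0.
Definition nhat (n : Z) : Cx := if Z.eqb n 0 then (0, -1) else RtoC (IZR n).
Definition zsq (n : Z) : Z := (n * Z.abs n)%Z.
Definition Phi (n n1 n2 n3 : Z) : Z := (zsq n - zsq n1 - zsq n2 - zsq n3)%Z.

Definition m1 (n n1 n2 n3 : Z) : Cx :=
  Cmul (Cmul (Cmul (RtoC 2) Ci)
     (Cdiv (RtoC (IZR (n * (n2 + n3))%Z)) (Cmul (nhat n1) (nhat n2))))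
   (RtoC (ind (0 <? n)%Z * ind (n2 + n3 <? 0)%Z * ind (negb (Z.eqb n3 0)))).

Definition m1t (n n1 n2 n3 : Z) : Cx :=
  Cmul (m1 n n1 n2 n3) (RtoC (ind (negb (Z.eqb ((n1 + n2) * (n1 + n3)) 0)))).

Definition wstar (w : R -> Z -> Cx) (t : R) (n : Z) : Cx := Cconj (w t (- n)%Z).

Definition N0_term (M : R) (w : R -> Z -> Cx) (t : R) (n n1 n2 : Z) : Cx :=
  let n3 := (n - n1 - n2)%Z in
  let P := Phi n n1 n2 n3 in
  if Rlt_dec M (IZR (Z.abs P)) then
    Cmul (Copp Ci)
      (Cmul (Cdiv (Cmul (Cexpi (t * IZR P)) (m1t n n1 n2 n3)) (RtoC (IZR P)))
            (Cmul (Cmul (w t n1) (w t n2)) (wstar w t n3)))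
  else C0.

Definition calN0 (M : R) (w : R -> Z -> Cx) (t : R) (n : Z) : Cx :=
  if (0 <? n)%Z then Csum2 (fun n1 n2 => N0_term M w t n n1 n2) else C0.

From Pilot Require Import Defs.
From Stdlib Require Import Reals ZArith Lra Lia Psatz ClassicalEpsilon FunctionalExtensionality.
Open Scope R_scope.

(* Write n1 = n + a with a = -n23 > 0.  On the region |Phi| > M the multiplier |m~_1|^2 / Phi^2 is
   bounded by a finite sum of products p(n1) q(n2 + c), where one factor is 1/m^2 and the other is
   1/m^2 restricted to |m| >= (M/2)^(1/2); hence its total mass in (n1, n2) is O(M^(-1/2)), uniformly
   in n.  Cauchy-Schwarz against the weight <n1>^2s <n2>^2s <n3>^2s, which dominates <n>^2s because
   the kernel lives on 0 < n < n1, followed by Young's inequality for the resulting l^1 convolution,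
   bounds the l^2_s norm of the trilinear form by C M^(-1/4) times the product of the three norms.
   N_0 is the diagonal of this form, so both estimates follow, with delta = 1/4, by trilinearity and
   a supremum over t. *)

(** * Sums over integer intervals *)

(* [zsum a L phi] sums [phi] over the [L + 1] integers [a, ..., a + L]. *)
Definition zsum (a : Z) (L : nat) (phi : Z -> R) : R :=
  sum_f_R0 (fun k => phi (a + Z.of_nat k)%Z) L.

Lemma zsum_0 a phi : zsum a 0 phi = phi a.
Proof. unfold zsum; simpl; f_equal; lia. Qed.

Lemma zsum_S a L phi : zsum a (S L) phi = zsum a L phi + phi (a + Z.of_nat (S L))%Z.
Proof. unfold zsum; apply tech5. Qed.

Lemma zsum_cons a L phi : zsum a (S L) phi = phi a + zsum (a + 1) L phi.
Proof.
  unfold zsum. rewrite decomp_sum by lia. simpl pred.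
  replace (a + Z.of_nat 0)%Z with a by lia. f_equal.
  apply sum_eq; intros; f_equal; lia.
Qed.

Lemma zsum_ext a L phi psi : (forall m, phi m = psi m) -> zsum a L phi = zsum a L psi.
Proof. intros H; unfold zsum; apply sum_eq; auto. Qed.

Lemma zsum_le a L phi psi : (forall m, phi m <= psi m) -> zsum a L phi <= zsum a L psi.
Proof. intros H; unfold zsum; apply sum_Rle; auto. Qed.

Lemma zsum_nonneg a L phi : (forall m, 0 <= phi m) -> 0 <= zsum a L phi.
Proof. intros H; unfold zsum; apply cond_pos_sum; auto. Qed.

Lemma zsum_plus a L phi psi :
  zsum a L (fun m => phi m + psi m) = zsum a L phi + zsum a L psi.
Proof. unfold zsum; apply sum_plus. Qed.

Lemma zsum_scal a L c phi : zsum a L (fun m => c * phi m) = c * zsum a L phi.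
Proof. unfold zsum; rewrite scal_sum; apply sum_eq; intros; ring. Qed.

Lemma zsum_shift a L c phi : zsum a L (fun m => phi (m + c)%Z) = zsum (a + c) L phi.
Proof. unfold zsum; apply sum_eq; intros; f_equal; lia. Qed.

Lemma zsum_le_extend a L j phi : (forall m, 0 <= phi m) ->
  zsum (a + Z.of_nat j) L phi <= zsum a (j + L) phi.
Proof.
  intros H; revert a; induction j as [|j IH]; intros a.
  - simpl (0 + L)%nat. replace (a + Z.of_nat 0)%Z with a by lia. lra.
  - simpl (S j + L)%nat. rewrite zsum_cons.
    specialize (IH (a + 1)%Z). replace (a + 1 + Z.of_nat j)%Z with (a + Z.of_nat (S j))%Z in IH by lia.
    specialize (H a). lra.
Qed.

Lemma zsum_le_lengthen a L j phi : (forall m, 0 <= phi m) -> zsum a L phi <= zsum a (L + j) phi.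
Proof.
  intros H; induction j as [|j IH]; [rewrite Nat.add_0_r; lra|].
  rewrite Nat.add_succ_r, zsum_S. specialize (H (a + Z.of_nat (S (L + j)))%Z). lra.
Qed.

Lemma zsum_subinterval a L b L' phi : (forall m, 0 <= phi m) -> (b <= a)%Z ->
  (a + Z.of_nat L <= b + Z.of_nat L')%Z -> zsum a L phi <= zsum b L' phi.
Proof.
  intros H h1 h2. set (j := Z.to_nat (a - b)).
  replace a with (b + Z.of_nat j)%Z by (unfold j; lia).
  eapply Rle_trans; [apply zsum_le_extend; auto|].
  replace L' with ((j + L) + (L' - (j + L)))%nat by (unfold j; lia).
  apply zsum_le_lengthen; auto.
Qed.

Lemma zsum_telescope a L phi F : (forall m, phi m <= F (m + 1)%Z - F m) ->
  zsum a L phi <= F (a + Z.of_nat L + 1)%Z - F a.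
Proof.
  intros H; induction L as [|L IH].
  - rewrite zsum_0. replace (a + Z.of_nat 0 + 1)%Z with (a + 1)%Z by lia. auto.
  - rewrite zsum_S. specialize (H (a + Z.of_nat (S L))%Z).
    replace (a + Z.of_nat L + 1)%Z with (a + Z.of_nat (S L))%Z in IH by lia. lra.
Qed.

Lemma zsum_reflect a L c phi :
  zsum a L (fun m => phi (c - m)%Z) = zsum (c - a - Z.of_nat L) L phi.
Proof.
  revert a; induction L as [|L IH]; intros a.
  - rewrite !zsum_0. f_equal; lia.
  - rewrite zsum_S, zsum_cons, IH.
    replace (c - a - Z.of_nat L)%Z with (c - a - Z.of_nat (S L) + 1)%Z by lia.
    replace (c - (a + Z.of_nat (S L)))%Z with (c - a - Z.of_nat (S L))%Z by lia. lra.
Qed.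

Lemma zsum_swap a L b L' (f : Z -> Z -> R) :
  zsum a L (fun i => zsum b L' (f i)) = zsum b L' (fun j => zsum a L (fun i => f i j)).
Proof.
  induction L as [|L IH].
  - rewrite zsum_0. apply zsum_ext; intros; rewrite zsum_0; auto.
  - rewrite zsum_S, IH, <- zsum_plus. apply zsum_ext; intros; rewrite zsum_S; auto.
Qed.

Lemma zsum_Cauchy_Schwarz a L u v :
  zsum a L (fun m => u m * v m) ^ 2 <= zsum a L (fun m => u m ^ 2) * zsum a L (fun m => v m ^ 2).
Proof.
  induction L as [|L IH].
  - rewrite !zsum_0; lra.
  - rewrite !zsum_S.
    set (P := zsum a L (fun m => u m * v m)) in *.
    set (A := zsum a L (fun m => u m ^ 2)) in *.
    set (B := zsum a L (fun m => v m ^ 2)) in *.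
    set (x := u (a + Z.of_nat (S L))%Z). set (y := v (a + Z.of_nat (S L))%Z).
    assert (HA : 0 <= A) by (apply zsum_nonneg; intros; nra).
    assert (HB : 0 <= B) by (apply zsum_nonneg; intros; nra).
    (* the cross term: [2 P x y <= A y^2 + B x^2] follows from [P^2 <= A B] by AM-GM *)
    assert (Hcross : 2 * P * x * y <= A * y ^ 2 + B * x ^ 2).
    { assert (Hxy : 0 <= x ^ 2 * y ^ 2) by nra.
      assert (Hsq : (2 * P * x * y) ^ 2 <= (A * y ^ 2 + B * x ^ 2) ^ 2).
      { pose proof (pow2_ge_0 (A * y ^ 2 - B * x ^ 2)).
        assert (4 * (x ^ 2 * y ^ 2) * P ^ 2 <= 4 * (x ^ 2 * y ^ 2) * (A * B))
          by (apply Rmult_le_compat_l; lra).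
        nra. }
      destruct (Rle_dec (2 * P * x * y) 0); [nra|].
      apply Rsqr_incr_0_var; unfold Rsqr; nra. }
    nra.
Qed.

Lemma zsum_Cauchy_Schwarz_sqrt a L u v : (forall m, 0 <= u m) -> (forall m, 0 <= v m) ->
  zsum a L (fun m => u m * v m)
  <= sqrt (zsum a L (fun m => u m ^ 2)) * sqrt (zsum a L (fun m => v m ^ 2)).
Proof.
  intros Hu Hv. rewrite <- sqrt_mult by (apply zsum_nonneg; intros; nra).
  rewrite <- (sqrt_pow2 (zsum a L _))
    by (apply zsum_nonneg; intros m; specialize (Hu m); specialize (Hv m); nra).
  apply sqrt_le_1_alt, zsum_Cauchy_Schwarz.
Qed.

Lemma Minkowski2 x y a b :
  sqrt ((x + a) ^ 2 + (y + b) ^ 2) <= sqrt (x ^ 2 + y ^ 2) + sqrt (a ^ 2 + b ^ 2).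
Proof.
  set (p := sqrt (x ^ 2 + y ^ 2)). set (q := sqrt (a ^ 2 + b ^ 2)).
  assert (Hp : 0 <= p) by apply sqrt_pos. assert (Hq : 0 <= q) by apply sqrt_pos.
  assert (Hp2 : p * p = x ^ 2 + y ^ 2) by (apply sqrt_sqrt; nra).
  assert (Hq2 : q * q = a ^ 2 + b ^ 2) by (apply sqrt_sqrt; nra).
  assert (Hpq : x * a + y * b <= p * q).
  { destruct (Rle_dec (x * a + y * b) 0); [nra|].
    apply Rsqr_incr_0_var; [|nra]. unfold Rsqr.
    pose proof (pow2_ge_0 (x * b - y * a)).
    replace (p * q * (p * q)) with ((p * p) * (q * q)) by ring. rewrite Hp2, Hq2. nra. }
  rewrite <- (sqrt_pow2 (p + q)) by lra. apply sqrt_le_1_alt. nra.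
Qed.

Lemma zsum_Minkowski2 a L u v :
  sqrt (zsum a L u ^ 2 + zsum a L v ^ 2) <= zsum a L (fun m => sqrt (u m ^ 2 + v m ^ 2)).
Proof.
  induction L as [|L IH].
  - rewrite !zsum_0; lra.
  - rewrite !zsum_S. eapply Rle_trans; [apply Minkowski2|]. lra.
Qed.

Lemma zsum_cv a L (u : Z -> nat -> R) (l : Z -> R) : (forall m, Un_cv (u m) (l m)) ->
  Un_cv (fun K => zsum a L (fun m => u m K)) (zsum a L l).
Proof.
  intros H. induction L as [|L IH].
  - intros eps He. destruct (H a eps He) as [N HN]. exists N. intros k Hk. rewrite !zsum_0. auto.
  - intros eps He. destruct (CV_plus _ _ _ _ IH (H (a + Z.of_nat (S L))%Z) eps He) as [N HN].
    exists N. intros k Hk. rewrite !zsum_S. apply HN; auto.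
Qed.

Definition symsum (K : nat) (phi : Z -> R) : R := zsum (- Z.of_nat K) (2 * K) phi.
Definition dsum (K : nat) (f : Z -> Z -> R) : R := symsum K (fun i => symsum K (f i)).

Lemma dsum_ext K f g : (forall i j, f i j = g i j) -> dsum K f = dsum K g.
Proof. intros H; apply zsum_ext; intros; apply zsum_ext; auto. Qed.
Lemma dsum_le K f g : (forall i j, f i j <= g i j) -> dsum K f <= dsum K g.
Proof. intros H; apply zsum_le; intros; apply zsum_le; auto. Qed.
Lemma dsum_nonneg K f : (forall i j, 0 <= f i j) -> 0 <= dsum K f.
Proof. intros H; apply zsum_nonneg; intros; apply zsum_nonneg; auto. Qed.
Lemma dsum_plus K f g : dsum K (fun i j => f i j + g i j) = dsum K f + dsum K g.
Proof. unfold dsum, symsum. rewrite <- zsum_plus. apply zsum_ext; intros; apply zsum_plus. Qed.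
Lemma dsum_scal K c f : dsum K (fun i j => c * f i j) = c * dsum K f.
Proof. unfold dsum, symsum. rewrite <- zsum_scal. apply zsum_ext; intros; apply zsum_scal. Qed.

Lemma symsum_le_S K phi : (forall m, 0 <= phi m) -> symsum K phi <= symsum (S K) phi.
Proof. intros H; apply zsum_subinterval; auto; lia. Qed.

Lemma dsum_le_S K f : (forall i j, 0 <= f i j) -> dsum K f <= dsum (S K) f.
Proof.
  intros H. eapply Rle_trans.
  - apply zsum_le; intros i. apply (symsum_le_S K (f i)). auto.
  - apply symsum_le_S. intros; apply zsum_nonneg; auto.
Qed.

Lemma dsum_Cauchy_Schwarz K u v : (forall i j, 0 <= u i j) -> (forall i j, 0 <= v i j) ->
  dsum K (fun i j => u i j * v i j)
  <= sqrt (dsum K (fun i j => u i j ^ 2)) * sqrt (dsum K (fun i j => v i j ^ 2)).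
Proof.
  intros Hu Hv. unfold dsum, symsum.
  set (a := (- Z.of_nat K)%Z). set (L := (2 * K)%nat).
  eapply Rle_trans; [apply zsum_le; intros i; apply zsum_Cauchy_Schwarz_sqrt; auto|].
  assert (Hsq : forall w : Z -> Z -> R, (forall i j, 0 <= w i j) ->
            forall i, sqrt (zsum a L (fun j => w i j ^ 2)) ^ 2 = zsum a L (fun j => w i j ^ 2)).
  { intros w _ i. rewrite <- Rsqr_pow2. apply Rsqr_sqrt, zsum_nonneg; intros; nra. }
  pose proof (zsum_Cauchy_Schwarz_sqrt a L (fun i => sqrt (zsum a L (fun j => u i j ^ 2)))
                (fun i => sqrt (zsum a L (fun j => v i j ^ 2))) (fun _ => sqrt_pos _) (fun _ => sqrt_pos _))
    as H; cbv beta in H.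
  rewrite (zsum_ext a L _ _ (Hsq u Hu)), (zsum_ext a L _ _ (Hsq v Hv)) in H. exact H.
Qed.

(** * Complex moduli and the [l^2_s] norm *)
Lemma Cmod2_nonneg z : 0 <= Cmod2 z.
Proof. unfold Cmod2; nra. Qed.
Lemma Cmod2_mul z w : Cmod2 (Cmul z w) = Cmod2 z * Cmod2 w.
Proof. unfold Cmod2, Cmul; simpl; ring. Qed.
Lemma Cmod2_conj z : Cmod2 (Cconj z) = Cmod2 z.
Proof. unfold Cmod2, Cconj; simpl; ring. Qed.
Lemma Cmod2_opp z : Cmod2 (Copp z) = Cmod2 z.
Proof. unfold Cmod2, Copp; simpl; ring. Qed.
Lemma Cmod2_Ci : Cmod2 Ci = 1.
Proof. unfold Cmod2, Ci; simpl; ring. Qed.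
Lemma Cmod2_expi t : Cmod2 (Cexpi t) = 1.
Proof. unfold Cmod2, Cexpi; simpl. pose proof (sin2_cos2 t) as H. unfold Rsqr in H. lra. Qed.
Lemma Cmod2_RtoC r : Cmod2 (RtoC r) = r ^ 2.
Proof. unfold Cmod2, RtoC; simpl; ring. Qed.
Lemma Cmod2_C0 : Cmod2 C0 = 0.
Proof. unfold Cmod2, C0; simpl; ring. Qed.
Lemma Cmod2_div z w : Cmod2 w <> 0 -> Cmod2 (Cdiv z w) = Cmod2 z / Cmod2 w.
Proof.
  intros H. unfold Cdiv. rewrite Cmod2_mul. unfold Cinv, Cmod2 at 2; simpl.
  unfold Cmod2 in *. field. auto.
Qed.

Lemma Cmul_assoc a b c : Cmul a (Cmul b c) = Cmul (Cmul a b) c.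
Proof. destruct a, b, c; unfold Cmul; simpl; f_equal; ring. Qed.
Lemma Cmul_C0_l z : Cmul C0 z = C0.
Proof. destruct z; unfold Cmul, C0; simpl; f_equal; ring. Qed.

Definition Cmod (z : Cx) : R := sqrt (Cmod2 z).

Lemma Cmod_nonneg z : 0 <= Cmod z.
Proof. apply sqrt_pos. Qed.
Lemma Cmod_sq z : Cmod z ^ 2 = Cmod2 z.
Proof. unfold Cmod. rewrite <- Rsqr_pow2. apply Rsqr_sqrt, Cmod2_nonneg. Qed.
Lemma Cmod_mul z w : Cmod (Cmul z w) = Cmod z * Cmod w.
Proof. unfold Cmod; rewrite Cmod2_mul; apply sqrt_mult; apply Cmod2_nonneg. Qed.
Lemma Cmod_conj z : Cmod (Cconj z) = Cmod z.
Proof. unfold Cmod; rewrite Cmod2_conj; auto. Qed.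
Lemma Cmod_add z w : Cmod (Cadd z w) <= Cmod z + Cmod w.
Proof. unfold Cmod, Cmod2, Cadd; simpl. apply Minkowski2. Qed.
Lemma Cmod_sub z w : Cmod (Csub z w) <= Cmod z + Cmod w.
Proof.
  unfold Csub. eapply Rle_trans; [apply Cmod_add|].
  unfold Cmod at 2 4; rewrite Cmod2_opp. lra.
Qed.
Lemma Rabs_fst_le_Cmod z : Rabs (fst z) <= Cmod z.
Proof.
  unfold Cmod, Cmod2. rewrite <- (sqrt_pow2 (Rabs _)) by apply Rabs_pos. apply sqrt_le_1_alt.
  rewrite pow2_abs. pose proof (pow2_ge_0 (snd z)). lra.
Qed.
Lemma Rabs_snd_le_Cmod z : Rabs (snd z) <= Cmod z.
Proof.
  unfold Cmod, Cmod2. rewrite <- (sqrt_pow2 (Rabs _)) by apply Rabs_pos. apply sqrt_le_1_alt.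
  rewrite pow2_abs. pose proof (pow2_ge_0 (fst z)). lra.
Qed.

Lemma Cmod2_cv (u : nat -> Cx) l :
  Un_cv (fun K => fst (u K)) (fst l) -> Un_cv (fun K => snd (u K)) (snd l) ->
  Un_cv (fun K => Cmod2 (u K)) (Cmod2 l).
Proof.
  intros H1 H2 eps He.
  destruct (CV_plus _ _ _ _ (CV_mult _ _ _ _ H1 H1) (CV_mult _ _ _ _ H2 H2) eps He) as [N HN].
  exists N; intros k Hk. specialize (HN k Hk). cbv beta in HN.
  unfold Cmod2. replace (fst (u k) ^ 2 + snd (u k) ^ 2) with (fst (u k) * fst (u k) + snd (u k) * snd (u k)) by ring.
  replace (fst l ^ 2 + snd l ^ 2) with (fst l * fst l + snd l * snd l) by ring. exact HN.
Qed.

Lemma Rlub_spec E : bound E -> (exists x, E x) -> is_lub E (Rlub E).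
Proof.
  intros Hb He. unfold Rlub. apply epsilon_spec.
  destruct (completeness E Hb He) as [m Hm]. eauto.
Qed.
Lemma Rlub_ge E x : bound E -> E x -> x <= Rlub E.
Proof. intros Hb Hx. apply (proj1 (Rlub_spec E Hb (ex_intro _ x Hx))); auto. Qed.
Lemma Rlub_le E B : (forall x, E x -> x <= B) -> (exists x, E x) -> Rlub E <= B.
Proof. intros HB He. apply (proj2 (Rlub_spec E (ex_intro _ B HB) He)). exact HB. Qed.

Definition jbr2s (s : R) (m : Z) : R := Rpower (jbr m) s ^ 2.

Lemma jbr_ge1 m : 1 <= jbr m.
Proof. unfold jbr. rewrite <- sqrt_1 at 1. apply sqrt_le_1_alt. pose proof (pow2_ge_0 (IZR m)). lra. Qed.

Lemma jbr2s_ge1 s m : 0 <= s -> 1 <= jbr2s s m.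
Proof.
  intros Hs. unfold jbr2s. assert (1 <= Rpower (jbr m) s).
  { rewrite <- (Rpower_O (jbr m)) by (pose proof (jbr_ge1 m); lra).
    apply Rle_Rpower; auto. apply jbr_ge1. }
  nra.
Qed.

Lemma jbr2s_nonneg s m : 0 <= s -> 0 <= jbr2s s m.
Proof. intros Hs; pose proof (jbr2s_ge1 s m Hs); lra. Qed.

Lemma jbr2s_le s m m' : 0 <= s -> (0 <= m <= m')%Z -> jbr2s s m <= jbr2s s m'.
Proof.
  intros Hs Hm. unfold jbr2s.
  assert (Rpower (jbr m) s <= Rpower (jbr m') s).
  { apply Rle_Rpower_l; auto. split; [pose proof (jbr_ge1 m); lra|].
    unfold jbr. apply sqrt_le_1_alt.
    assert (0 <= IZR m <= IZR m') by (split; apply IZR_le; lia). nra. }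
  assert (0 <= Rpower (jbr m) s) by (unfold Rpower; apply Rlt_le, exp_pos). nra.
Qed.

Definition l2s_dens (s : R) (f : Z -> Cx) (m : Z) : R := jbr2s s m * Cmod2 (f m).

Lemma l2s_dens_nonneg s f m : 0 <= s -> 0 <= l2s_dens s f m.
Proof.
  intros; unfold l2s_dens. pose proof (jbr2s_nonneg s m H). pose proof (Cmod2_nonneg (f m)). nra.
Qed.

Lemma l2s_partial_symsum s f N : l2s_partial s f N = symsum N (l2s_dens s f).
Proof.
  unfold l2s_partial, symsum, zsum, l2s_dens, jbr2s. apply sum_eq; intros.
  replace (Z.of_nat i - Z.of_nat N)%Z with (- Z.of_nat N + Z.of_nat i)%Z by lia. auto.
Qed.

Lemma l2s_norm_nonneg s f : 0 <= l2s_norm s f.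
Proof. apply sqrt_pos. Qed.

Lemma l2s_norm_sq s f : 0 <= s -> in_l2s s f ->
  l2s_norm s f ^ 2 = Rlub (fun x => exists N, x = l2s_partial s f N).
Proof.
  intros Hs [B HB]. unfold l2s_norm. rewrite <- Rsqr_pow2. apply Rsqr_sqrt.
  apply Rle_trans with (l2s_partial s f 0).
  - rewrite l2s_partial_symsum. apply zsum_nonneg. intros; apply l2s_dens_nonneg; auto.
  - apply Rlub_ge; [exists B; intros x [N ->]; auto | eauto].
Qed.

Lemma zsum_l2s_dens_le s f a L : 0 <= s -> in_l2s s f ->
  zsum a L (l2s_dens s f) <= l2s_norm s f ^ 2.
Proof.
  intros Hs Hf. rewrite l2s_norm_sq by auto.
  apply Rle_trans with (symsum (Z.to_nat (Z.abs a) + L) (l2s_dens s f)).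
  - apply zsum_subinterval; [intros; apply l2s_dens_nonneg; auto | lia | lia].
  - rewrite <- l2s_partial_symsum. apply Rlub_ge; [|eauto].
    destruct Hf as [B HB]. exists B. intros x [N ->]; auto.
Qed.

Lemma l2s_dens_le s f m : 0 <= s -> in_l2s s f -> l2s_dens s f m <= l2s_norm s f ^ 2.
Proof. intros Hs Hf. rewrite <- (zsum_0 m). apply zsum_l2s_dens_le; auto. Qed.

Lemma l2s_norm_le s f B : (forall N, symsum N (l2s_dens s f) <= B) -> l2s_norm s f <= sqrt B.
Proof.
  intros H. apply sqrt_le_1_alt, Rlub_le; [|exists (l2s_partial s f 0); eauto].
  intros x [N ->]. rewrite l2s_partial_symsum; auto.
Qed.

Lemma in_l2s_of_bound s f B : (forall N, symsum N (l2s_dens s f) <= B) -> in_l2s s f.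
Proof. intros H; exists B; intros N; rewrite l2s_partial_symsum; auto. Qed.

Lemma zsum_Minkowski a L u v : (forall m, 0 <= u m) -> (forall m, 0 <= v m) ->
  zsum a L (fun m => (u m + v m) ^ 2)
  <= (sqrt (zsum a L (fun m => u m ^ 2)) + sqrt (zsum a L (fun m => v m ^ 2))) ^ 2.
Proof.
  intros Hu Hv.
  rewrite (zsum_ext a L _ (fun m => (u m ^ 2 + v m ^ 2) + 2 * (u m * v m))) by (intros; ring).
  rewrite !zsum_plus, zsum_scal.
  pose proof (zsum_Cauchy_Schwarz_sqrt a L u v Hu Hv).
  assert (HA : 0 <= zsum a L (fun m => u m ^ 2)) by (apply zsum_nonneg; intros; nra).
  assert (HB : 0 <= zsum a L (fun m => v m ^ 2)) by (apply zsum_nonneg; intros; nra).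
  pose proof (sqrt_sqrt _ HA). pose proof (sqrt_sqrt _ HB). nra.
Qed.

Lemma l2s_triangle s f g h : 0 <= s -> in_l2s s f -> in_l2s s g ->
  (forall m, Cmod (h m) <= Cmod (f m) + Cmod (g m)) ->
  in_l2s s h /\ l2s_norm s h <= l2s_norm s f + l2s_norm s g.
Proof.
  intros Hs Hf Hg Hh.
  set (u := fun m => sqrt (jbr2s s m) * Cmod (f m)).
  set (v := fun m => sqrt (jbr2s s m) * Cmod (g m)).
  assert (Hu : forall m, 0 <= u m) by (intros; apply Rmult_le_pos; [apply sqrt_pos|apply Cmod_nonneg]).
  assert (Hv : forall m, 0 <= v m) by (intros; apply Rmult_le_pos; [apply sqrt_pos|apply Cmod_nonneg]).
  assert (Hsq : forall k m, (sqrt (jbr2s s m) * Cmod (k m)) ^ 2 = l2s_dens s k m).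
  { intros k m. unfold l2s_dens.
    rewrite Rpow_mult_distr, Cmod_sq, <- Rsqr_pow2, Rsqr_sqrt; auto. apply jbr2s_nonneg; auto. }
  assert (Hpt : forall m, l2s_dens s h m <= (u m + v m) ^ 2).
  { intros m. rewrite <- Hsq. unfold u, v.
    pose proof (Hh m). pose proof (Cmod_nonneg (h m)). pose proof (sqrt_pos (jbr2s s m)).
    rewrite <- Rmult_plus_distr_l, !Rpow_mult_distr.
    apply Rmult_le_compat_l; [nra|]. apply pow_incr; auto. }
  assert (HW : forall N, symsum N (l2s_dens s h) <= (l2s_norm s f + l2s_norm s g) ^ 2).
  { intros N. eapply Rle_trans; [apply zsum_le, Hpt|].
    eapply Rle_trans; [apply zsum_Minkowski; auto|].
    assert (Hnorm : forall k, in_l2s s k ->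
              sqrt (symsum N (fun m => (sqrt (jbr2s s m) * Cmod (k m)) ^ 2)) <= l2s_norm s k).
    { intros k Hk. unfold symsum. rewrite (zsum_ext _ _ _ _ (Hsq k)).
      rewrite <- (sqrt_pow2 (l2s_norm s k)) by apply l2s_norm_nonneg.
      apply sqrt_le_1_alt, zsum_l2s_dens_le; auto. }
    apply pow_incr. split; [apply Rplus_le_le_0_compat; apply sqrt_pos|].
    apply Rplus_le_compat; apply Hnorm; auto. }
  split; [eapply in_l2s_of_bound; eauto|].
  eapply Rle_trans; [apply l2s_norm_le; eauto|].
  rewrite sqrt_pow2; [lra|]. pose proof (l2s_norm_nonneg s f); pose proof (l2s_norm_nonneg s g); lra.
Qed.

(** * Continuity in time *)

Lemma Cmod_le_sub_add z w : Cmod z <= Cmod (Csub z w) + Cmod w.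
Proof.
  replace z with (Cadd (Csub z w) w) at 1 by (unfold Cadd, Csub, Copp; destruct z, w; simpl; f_equal; ring).
  apply Cmod_add.
Qed.

Lemma Cmod_Csub_comm z w : Cmod (Csub z w) = Cmod (Csub w z).
Proof. unfold Cmod, Cmod2, Csub, Cadd, Copp; simpl. f_equal; ring. Qed.

Lemma l2s_norm_sub_lipschitz s f g : 0 <= s -> in_l2s s f -> in_l2s s g ->
  Rabs (l2s_norm s f - l2s_norm s g) <= l2s_norm s (fun m => Csub (f m) (g m)).
Proof.
  intros Hs Hf Hg.
  destruct (l2s_triangle s f g (fun m => Csub (f m) (g m)) Hs Hf Hg (fun m => Cmod_sub _ _)) as [Hd _].
  destruct (l2s_triangle s _ g f Hs Hd Hg (fun m => Cmod_le_sub_add _ _)) as [_ H1].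
  destruct (l2s_triangle s _ f g Hs Hd Hf) as [_ H2].
  { intros m. rewrite Cmod_Csub_comm. apply Cmod_le_sub_add. }
  unfold Rabs; destruct Rcase_abs; lra.
Qed.

(* [clamp T] extends [t |-> ||w t||] continuously from [[0, T]] to all of [R]. *)
Definition clamp (T t : R) : R := Rmax 0 (Rmin T t).

Lemma clamp_in T t : 0 <= T -> 0 <= clamp T t <= T.
Proof. intros; unfold clamp, Rmax, Rmin; repeat destruct Rle_dec; lra. Qed.
Lemma clamp_id T t : 0 <= t <= T -> clamp T t = t.
Proof. intros; unfold clamp, Rmax, Rmin; repeat destruct Rle_dec; lra. Qed.
Lemma clamp_lipschitz T t u : 0 <= T -> Rabs (clamp T t - clamp T u) <= Rabs (t - u).
Proof.
  intros; unfold clamp, Rmax, Rmin; repeat destruct Rle_dec; unfold Rabs; repeat destruct Rcase_abs; lra.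
Qed.

Lemma CTnorm_bounded s T w : 0 <= s -> 0 <= T -> in_CTl2s s T w ->
  bound (fun x => exists t, 0 <= t <= T /\ x = l2s_norm s (w t)).
Proof.
  intros Hs HT [Hin Hc].
  set (g := fun t => l2s_norm s (w (clamp T t))).
  assert (Hcont : forall c, 0 <= c <= T -> continuity_pt g c).
  { intros c _ eps Heps.
    destruct (Hc (clamp T c) (clamp_in T c HT) eps Heps) as [eta [Heta H]].
    exists eta. split; auto. intros x [_ Hx]. simpl in *. unfold R_dist in *.
    assert (Hd : Rabs (clamp T c - clamp T x) < eta).
    { eapply Rle_lt_trans; [apply clamp_lipschitz; auto|]. rewrite Rabs_minus_sym. auto. }
    rewrite Rabs_minus_sym. eapply Rle_lt_trans; [|apply (H _ (clamp_in T x HT) Hd)].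
    apply l2s_norm_sub_lipschitz; auto; apply Hin, clamp_in; auto. }
  destruct (continuity_ab_maj g 0 T HT Hcont) as [tmax [Hmax _]].
  exists (g tmax). intros x [t [Ht ->]]. specialize (Hmax t Ht). unfold g in Hmax.
  rewrite clamp_id in Hmax; auto.
Qed.

Lemma CTnorm_ge s T w t : 0 <= s -> in_CTl2s s T w -> 0 <= t <= T ->
  l2s_norm s (w t) <= CTnorm s T w.
Proof.
  intros Hs Hw Ht. apply Rlub_ge; [apply CTnorm_bounded; auto; lra | eauto].
Qed.

Lemma CTnorm_le s T u B : 0 <= T -> (forall t, 0 <= t <= T -> l2s_norm s (u t) <= B) ->
  CTnorm s T u <= B.
Proof.
  intros HT H. apply Rlub_le.
  - intros x [t [Ht ->]]. auto.
  - exists (l2s_norm s (u 0)), 0. split; [lra | auto].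
Qed.

Lemma in_CTl2s_sub s T w wt : 0 <= s -> in_CTl2s s T w -> in_CTl2s s T wt ->
  in_CTl2s s T (fun t n => Csub (w t n) (wt t n)).
Proof.
  intros Hs [H1 H2] [H3 H4].
  assert (Hsub : forall f g, in_l2s s f -> in_l2s s g -> in_l2s s (fun n => Csub (f n) (g n)))
    by (intros f g Hf Hg; exact (proj1 (l2s_triangle s f g _ Hs Hf Hg (fun m => Cmod_sub _ _)))).
  split; [intros t Ht; apply Hsub; auto|].
  intros t Ht eps He.
  destruct (H2 t Ht (eps / 2) ltac:(lra)) as [e1 [He1 Hw1]].
  destruct (H4 t Ht (eps / 2) ltac:(lra)) as [e2 [He2 Hw2]].
  exists (Rmin e1 e2). split; [apply Rmin_pos; auto|].
  intros t' Ht' Hd.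
  specialize (Hw1 t' Ht' (Rlt_le_trans _ _ _ Hd (Rmin_l _ _))).
  specialize (Hw2 t' Ht' (Rlt_le_trans _ _ _ Hd (Rmin_r _ _))).
  destruct (l2s_triangle s _ _ (fun n => Csub (Csub (w t n) (wt t n)) (Csub (w t' n) (wt t' n))) Hs
              (Hsub _ _ (H1 t Ht) (H1 t' Ht')) (Hsub _ _ (H3 t Ht) (H3 t' Ht'))) as [_ Hn].
  { intros m. replace (Csub (Csub (w t m) (wt t m)) (Csub (w t' m) (wt t' m)))
      with (Csub (Csub (w t m) (w t' m)) (Csub (wt t m) (wt t' m)))
      by (unfold Csub, Cadd, Copp; simpl; f_equal; ring).
    apply Cmod_sub. }
  lra.
Qed.

(** * The resonant kernel *)

Definition resonant_coef (M t : R) (n n1 n2 : Z) : Cx :=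
  let P := Phi n n1 n2 (n - n1 - n2) in
  if Rlt_dec M (IZR (Z.abs P)) then
    Cmul (Copp Ci) (Cdiv (Cmul (Cexpi (t * IZR P)) (m1t n n1 n2 (n - n1 - n2))) (RtoC (IZR P)))
  else C0.

Definition kernel (M : R) (n n1 n2 : Z) : R :=
  let P := Phi n n1 n2 (n - n1 - n2) in
  if Rlt_dec M (IZR (Z.abs P)) then Cmod2 (m1t n n1 n2 (n - n1 - n2)) / IZR P ^ 2 else 0.

Lemma pow2_pos x : x <> 0 -> 0 < x ^ 2.
Proof. intros H. rewrite <- Rsqr_pow2. apply Rsqr_pos_lt, H. Qed.

Lemma IZR_neq0_of_cutoff M P : 0 <= M -> M < IZR (Z.abs P) -> IZR P <> 0.
Proof. intros HM H E. apply eq_IZR_R0 in E. subst. simpl in H. lra. Qed.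

Lemma Cmod2_nhat_pos m : 0 < Cmod2 (nhat m).
Proof.
  unfold nhat. destruct (Z.eqb_spec m 0).
  - unfold Cmod2; simpl; lra.
  - rewrite Cmod2_RtoC. apply pow2_pos, not_0_IZR; auto.
Qed.

Lemma kernel_nonneg M n n1 n2 : 0 <= M -> 0 <= kernel M n n1 n2.
Proof.
  intros HM. unfold kernel. destruct Rlt_dec as [h|h]; [|lra].
  apply Rmult_le_pos; [apply Cmod2_nonneg|].
  apply Rlt_le, Rinv_0_lt_compat, pow2_pos. eapply IZR_neq0_of_cutoff; eauto.
Qed.

Lemma Cmod_resonant_coef M t n n1 n2 : 0 <= M ->
  Cmod (resonant_coef M t n n1 n2) = sqrt (kernel M n n1 n2).
Proof.
  intros HM. unfold Cmod, resonant_coef, kernel. destruct Rlt_dec as [h|h].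
  - f_equal. pose proof (IZR_neq0_of_cutoff _ _ HM h).
    rewrite Cmod2_mul, Cmod2_opp, Cmod2_Ci, Cmod2_div, Cmod2_mul, Cmod2_expi, Cmod2_RtoC by
      (rewrite Cmod2_RtoC; apply Rgt_not_eq, pow2_pos; auto).
    field; auto.
  - rewrite Cmod2_C0, sqrt_0; auto.
Qed.

Lemma kernel_below_cutoff M n n1 n2 : IZR (Z.abs (Phi n n1 n2 (n - n1 - n2))) <= M ->
  kernel M n n1 n2 = 0.
Proof. intros H. unfold kernel. destruct Rlt_dec; [lra | auto]. Qed.

Lemma ind_true b : b = true -> Defs.ind b = 1.
Proof. intros ->; reflexivity. Qed.
Lemma ind_false b : b = false -> Defs.ind b = 0.
Proof. intros ->; reflexivity. Qed.

Lemma kernel_off_support M n n1 n2 :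
  (n <= 0 \/ n1 <= n \/ n - n1 - n2 = 0 \/ (n1 + n2) * (n1 + (n - n1 - n2)) = 0)%Z ->
  kernel M n n1 n2 = 0.
Proof.
  intros H. unfold kernel, m1t, m1. destruct Rlt_dec; [|auto].
  destruct H as [H|[H|[H|H]]];
    [ rewrite (ind_false (0 <? n)%Z) by (apply Z.ltb_ge; lia)
    | rewrite (ind_false (n2 + (n - n1 - n2) <? 0)%Z) by (apply Z.ltb_ge; lia)
    | rewrite (ind_false (negb (n - n1 - n2 =? 0)%Z)) by (rewrite H; reflexivity)
    | rewrite (ind_false (negb ((n1 + n2) * (n1 + (n - n1 - n2)) =? 0)%Z)) by (rewrite H; reflexivity) ];
    unfold Cmod2, Cmul, RtoC; simpl; unfold Rdiv; ring.
Qed.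

(* [inv_sq m = 1 / |hat m|^2], i.e. [1 / m^2], and [1] at [m = 0]. *)
Definition inv_sq (m : Z) : R := / Cmod2 (nhat m).
Definition inv_sq_tail (L : R) (m : Z) : R := if Rle_dec L (IZR (Z.abs m)) then inv_sq m else 0.

Lemma inv_sq_pos m : 0 < inv_sq m.
Proof. apply Rinv_0_lt_compat, Cmod2_nhat_pos. Qed.
Lemma inv_sq_tail_nonneg L m : 0 <= inv_sq_tail L m.
Proof. unfold inv_sq_tail; destruct Rle_dec; [apply Rlt_le, inv_sq_pos | lra]. Qed.
Lemma inv_sq_nz m : m <> 0%Z -> inv_sq m = / IZR m ^ 2.
Proof.
  intros H; unfold inv_sq, nhat. destruct (Z.eqb_spec m 0); [lia|]. rewrite Cmod2_RtoC; auto.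
Qed.
Lemma inv_sq_0 : inv_sq 0 = 1.
Proof. unfold inv_sq, nhat, Cmod2; simpl. field. Qed.
Lemma inv_sq_opp m : inv_sq (- m) = inv_sq m.
Proof.
  destruct (Z.eq_dec m 0) as [->|h]; [reflexivity|].
  rewrite !inv_sq_nz by lia. rewrite opp_IZR. f_equal; ring.
Qed.
Lemma inv_sq_tail_big L m : L <= IZR (Z.abs m) -> inv_sq_tail L m = inv_sq m.
Proof. intros H; unfold inv_sq_tail; destruct Rle_dec; [auto | lra]. Qed.
Lemma inv_sq_tail_opp L m : inv_sq_tail L (- m) = inv_sq_tail L m.
Proof. unfold inv_sq_tail. rewrite Z.abs_opp, inv_sq_opp. auto. Qed.

Lemma kernel_on_support M n a n2 : 0 <= M -> (0 < n)%Z -> (0 < a)%Z ->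
  (- a - n2 <> 0)%Z -> ((n + a + n2) * (n - n2) <> 0)%Z ->
  M < IZR (Z.abs (Phi n (n + a) n2 (- a - n2))) ->
  kernel M n (n + a) n2
  = 4 * (IZR n * IZR a) ^ 2 * inv_sq (n + a) * inv_sq n2 / IZR (Phi n (n + a) n2 (- a - n2)) ^ 2.
Proof.
  intros HM hn ha h3 h4 hP. unfold kernel, m1t, m1.
  replace (n - (n + a) - n2)%Z with (- a - n2)%Z by ring.
  replace (n2 + (- a - n2))%Z with (- a)%Z by ring.
  replace ((n + a + n2) * (n + a + (- a - n2)))%Z with ((n + a + n2) * (n - n2))%Z by ring.
  destruct Rlt_dec as [_|]; [|lra].
  rewrite (ind_true (0 <? n)%Z), (ind_true (- a <? 0)%Z) by (apply Z.ltb_lt; lia).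
  rewrite (ind_true (negb (- a - n2 =? 0)%Z)) by (apply Bool.negb_true_iff, Z.eqb_neq; auto).
  rewrite (ind_true (negb ((n + a + n2) * (n - n2) =? 0)%Z)) by (apply Bool.negb_true_iff, Z.eqb_neq; auto).
  pose proof (Cmod2_nhat_pos (n + a)). pose proof (Cmod2_nhat_pos n2).
  unfold inv_sq. rewrite !Cmod2_mul, !Cmod2_RtoC, Cmod2_Ci, Cmod2_div, Cmod2_mul, Cmod2_RtoC
    by (rewrite Cmod2_mul; nra).
  rewrite mult_IZR, opp_IZR. field. repeat split; try lra.
  apply IZR_neq0_of_cutoff with M; auto.
Qed.

Lemma Rdiv_le_of_le_mul X Q Y : 0 < Q -> X <= Y * Q -> X / Q <= Y.
Proof.
  intros HQ H. apply (Rmult_le_reg_r Q); auto. unfold Rdiv. rewrite Rmult_assoc, Rinv_l; lra.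
Qed.

Lemma sqrt_half_le M u : 0 <= u -> M / 2 <= u ^ 2 -> sqrt (M / 2) <= u.
Proof. intros Hu H. rewrite <- (sqrt_pow2 u Hu). apply sqrt_le_1_alt, H. Qed.

Lemma kernel_le_case_n2_n3_nonpos M n a n2 : 1 <= M -> (0 < n)%Z -> (0 < a)%Z -> (- a < n2 <= 0)%Z ->
  M < IZR (Z.abs (Phi n (n + a) n2 (- a - n2))) ->
  kernel M n (n + a) n2 <= inv_sq_tail (sqrt (M / 2)) (n + a) * inv_sq n2.
Proof.
  intros HM hn ha h2 hP. set (P := Phi n (n + a) n2 (- a - n2)) in *.
  assert (HPZ : (2 * n * a <= - P <= (n + a) * (n + a))%Z).
  { unfold P, Phi, zsq.
    rewrite (Z.abs_eq n), (Z.abs_eq (n + a)), (Z.abs_neq n2), (Z.abs_neq (- a - n2)) by lia. nia. }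
  rewrite kernel_on_support by (auto; try lra; try apply Z.neq_mul_0; lia).
  fold P.
  assert (Hx : 1 <= IZR n) by (apply IZR_le; lia). assert (Hy : 1 <= IZR a) by (apply IZR_le; lia).
  assert (HP1 : 2 * IZR n * IZR a <= - IZR P).
  { rewrite <- opp_IZR. replace 2 with (IZR 2) by reflexivity. rewrite <- !mult_IZR. apply IZR_le; lia. }
  assert (HP2 : IZR (Z.abs P) <= (IZR n + IZR a) ^ 2).
  { replace ((IZR n + IZR a) ^ 2) with (IZR ((n + a) * (n + a))) by (rewrite mult_IZR, plus_IZR; ring).
    apply IZR_le; lia. }
  assert (HPneg : IZR P <= -2) by nra.
  rewrite inv_sq_tail_big by (rewrite Z.abs_eq, plus_IZR by lia; apply sqrt_half_le; lra).
  set (V := inv_sq (n + a) * inv_sq n2).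
  assert (HV : 0 <= V) by (pose proof (inv_sq_pos (n + a)); pose proof (inv_sq_pos n2); unfold V; nra).
  replace (4 * (IZR n * IZR a) ^ 2 * inv_sq (n + a) * inv_sq n2 / IZR P ^ 2)
    with (V * ((2 * IZR n * IZR a) ^ 2 / IZR P ^ 2)) by (unfold V; field; nra).
  rewrite <- (Rmult_1_r V) at 2. apply Rmult_le_compat_l; auto.
  apply Rdiv_le_of_le_mul; [apply pow2_pos; lra|]. rewrite Rmult_1_l.
  replace (IZR P ^ 2) with ((- IZR P) ^ 2) by ring. apply pow_incr; nra.
Qed.

Lemma inv_sq_mul_sq_le m k : m <> 0%Z -> (Z.abs k <= 2 * Z.abs m)%Z -> inv_sq m * IZR k ^ 2 <= 4.
Proof.
  intros hm hk. rewrite inv_sq_nz by auto.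
  assert (Z : (k * k <= 4 * (m * m))%Z) by nia.
  apply IZR_le in Z. rewrite !mult_IZR in Z.
  assert (Hm : 0 < IZR m ^ 2) by (apply pow2_pos, not_0_IZR; auto).
  replace (/ IZR m ^ 2 * IZR k ^ 2) with (IZR k ^ 2 / IZR m ^ 2) by (unfold Rdiv; ring).
  apply Rdiv_le_of_le_mul; [auto | nra].
Qed.

Lemma kernel_factored_eq M n a n2 d : 0 <= M -> (0 < n)%Z -> (0 < a)%Z -> n2 <> 0%Z ->
  (- a - n2 <> 0)%Z -> ((n + a + n2) * (n - n2) <> 0)%Z ->
  Phi n (n + a) n2 (- a - n2) = (2 * a * d)%Z -> M < IZR (Z.abs (2 * a * d)) ->
  kernel M n (n + a) n2 = inv_sq (n + a) * inv_sq n2 * inv_sq d * IZR n ^ 2.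
Proof.
  intros HM hn ha hn2 h3 h4 HP hP.
  assert (hd : d <> 0%Z) by (intros ->; rewrite Z.mul_0_r in hP; simpl in hP; lra).
  rewrite kernel_on_support, HP by (auto; rewrite HP; auto).
  assert (Hy : 1 <= IZR a) by (apply IZR_le; lia).
  assert (He : IZR d <> 0) by (apply not_0_IZR; lia).
  rewrite (inv_sq_nz n2), (inv_sq_nz d), !mult_IZR by lia.
  assert (Hq : IZR n2 <> 0) by (apply not_0_IZR; auto).
  field. repeat split; lra.
Qed.

(* One of [n2], [d] is at least [n / 2] in absolute value, which absorbs the [n^2]. *)
Lemma kernel_le_case_factored M n a n2 d : 1 <= M -> (0 < n)%Z -> (0 < a)%Z -> n2 <> 0%Z -> d <> 0%Z ->
  (- a - n2 <> 0)%Z -> ((n + a + n2) * (n - n2) <> 0)%Z ->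
  Phi n (n + a) n2 (- a - n2) = (2 * a * d)%Z -> M < IZR (Z.abs (2 * a * d)) ->
  (n <= 2 * Z.abs n2 \/ n <= 2 * Z.abs d /\ Z.abs d <= n)%Z ->
  kernel M n (n + a) n2 <= 4 * (inv_sq_tail (sqrt (M / 2)) (n + a) * inv_sq d
                               + inv_sq (n + a) * inv_sq_tail (sqrt (M / 2)) d
                               + inv_sq_tail (sqrt (M / 2)) (n + a) * inv_sq n2).
Proof.
  intros HM hn ha hn2 hd h3 h4 HP hP Hcase. set (L := sqrt (M / 2)).
  assert (HL : L * L = M / 2) by (apply sqrt_sqrt; lra).
  rewrite (kernel_factored_eq M n a n2 d) by (auto; lra).
  assert (Hx : 1 <= IZR n) by (apply IZR_le; lia). assert (Hy : 1 <= IZR a) by (apply IZR_le; lia).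
  assert (Hcut : M < 2 * IZR a * IZR (Z.abs d)).
  { rewrite Z.abs_mul, Z.abs_mul, (Z.abs_eq a) in hP by lia. rewrite !mult_IZR in hP. exact hP. }
  assert (Htail1 : L <= IZR n + IZR a -> inv_sq_tail L (n + a) = inv_sq (n + a))
    by (intros; apply inv_sq_tail_big; rewrite Z.abs_eq, plus_IZR by lia; auto).
  pose proof (inv_sq_pos (n + a)). pose proof (inv_sq_pos n2). pose proof (inv_sq_pos d).
  pose proof (inv_sq_tail_nonneg L (n + a)). pose proof (inv_sq_tail_nonneg L d).
  destruct Hcase as [Hc|[Hc Hc']].
  - assert (Hb : inv_sq (n + a) * inv_sq n2 * inv_sq d * IZR n ^ 2 <= 4 * (inv_sq (n + a) * inv_sq d)).
    { pose proof (inv_sq_mul_sq_le n2 n hn2 ltac:(lia)).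
      replace (inv_sq (n + a) * inv_sq n2 * inv_sq d * IZR n ^ 2)
        with ((inv_sq n2 * IZR n ^ 2) * (inv_sq (n + a) * inv_sq d)) by ring.
      apply Rmult_le_compat_r; [nra | auto]. }
    destruct (Rle_dec L (IZR n + IZR a)) as [Hl|Hl].
    + rewrite Htail1 by auto.
      assert (0 <= inv_sq (n + a) * inv_sq_tail L d) by nra.
      assert (0 <= inv_sq (n + a) * inv_sq n2) by nra. lra.
    + (* here [2 L^2 = M < 2 a |d|] with [a < L] *)
      assert (Hl' : L <= IZR (Z.abs d)) by nra.
      rewrite (inv_sq_tail_big L d) by auto.
      assert (0 <= inv_sq_tail L (n + a) * inv_sq d) by nra.
      assert (0 <= inv_sq_tail L (n + a) * inv_sq n2) by nra. lra.
  - assert (Hl : L <= IZR n + IZR a).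
    { assert (IZR (Z.abs d) <= IZR n) by (apply IZR_le; lia). apply sqrt_half_le; nra. }
    rewrite Htail1 by auto.
    assert (Hb : inv_sq (n + a) * inv_sq n2 * inv_sq d * IZR n ^ 2 <= 4 * (inv_sq (n + a) * inv_sq n2)).
    { pose proof (inv_sq_mul_sq_le d n hd ltac:(lia)).
      replace (inv_sq (n + a) * inv_sq n2 * inv_sq d * IZR n ^ 2)
        with ((inv_sq d * IZR n ^ 2) * (inv_sq (n + a) * inv_sq n2)) by ring.
      apply Rmult_le_compat_r; [nra | auto]. }
    assert (0 <= inv_sq (n + a) * inv_sq d) by nra.
    assert (0 <= inv_sq (n + a) * inv_sq_tail L d) by nra. lra.
Qed.

(* Each product is summable in [n1] and [n2] separately, the [inv_sq_tail] factor giving the gain [L^-1]. *)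
Definition kernel_majorant (L : R) (n n1 n2 : Z) : R :=
  inv_sq_tail L n1 * inv_sq n2 + inv_sq_tail L n1 * inv_sq (n2 - n)
  + inv_sq n1 * inv_sq_tail L (n2 - n) + inv_sq_tail L n1 * inv_sq (n2 + n1)
  + inv_sq n1 * inv_sq_tail L (n2 + n1).

Lemma kernel_majorant_nonneg L n n1 n2 : 0 <= kernel_majorant L n n1 n2.
Proof.
  unfold kernel_majorant.
  pose proof (inv_sq_tail_nonneg L n1). pose proof (inv_sq_tail_nonneg L (n2 - n)).
  pose proof (inv_sq_tail_nonneg L (n2 + n1)). pose proof (inv_sq_pos n1).
  pose proof (inv_sq_pos n2). pose proof (inv_sq_pos (n2 - n)). pose proof (inv_sq_pos (n2 + n1)).
  repeat apply Rplus_le_le_0_compat; apply Rmult_le_pos; lra.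
Qed.

Lemma Phi_n3_nonneg_eq n a n2 : (0 < n)%Z -> (0 < a)%Z -> (n2 <= - a)%Z ->
  Phi n (n + a) n2 (- a - n2) = (2 * a * (- (n2 + (n + a))))%Z.
Proof.
  intros. unfold Phi, zsq.
  rewrite (Z.abs_eq n), (Z.abs_eq (n + a)), (Z.abs_neq n2), (Z.abs_eq (- a - n2)) by lia. ring.
Qed.

Lemma Phi_n2_pos_eq n a n2 : (0 < n)%Z -> (0 < a)%Z -> (0 < n2)%Z ->
  Phi n (n + a) n2 (- a - n2) = (2 * a * (n2 - n))%Z.
Proof.
  intros. unfold Phi, zsq.
  rewrite (Z.abs_eq n), (Z.abs_eq (n + a)), (Z.abs_eq n2), (Z.abs_neq (- a - n2)) by lia. ring.
Qed.

Lemma kernel_le_majorant M n n1 n2 : 1 <= M ->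
  kernel M n n1 n2 <= 4 * kernel_majorant (sqrt (M / 2)) n n1 n2.
Proof.
  intros HM. set (L := sqrt (M / 2)).
  pose proof (kernel_majorant_nonneg L n n1 n2) as Hmaj.
  destruct (Z_lt_le_dec 0 n) as [hn|hn]; [|rewrite kernel_off_support by lia; lra].
  destruct (Z_lt_le_dec n n1) as [h1|h1]; [|rewrite kernel_off_support by lia; lra].
  destruct (Z.eq_dec (n - n1 - n2) 0) as [h3|h3]; [rewrite kernel_off_support by lia; lra|].
  destruct (Z.eq_dec ((n1 + n2) * (n1 + (n - n1 - n2))) 0) as [h4|h4];
    [rewrite kernel_off_support by lia; lra|].
  destruct (Rlt_dec M (IZR (Z.abs (Phi n n1 n2 (n - n1 - n2))))) as [hP|hP];
    [|rewrite kernel_below_cutoff by lra; lra].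
  set (a := (n1 - n)%Z). replace n1 with (n + a)%Z in * by (unfold a; ring).
  assert (ha : (0 < a)%Z) by lia.
  replace (n - (n + a) - n2)%Z with (- a - n2)%Z in * by ring.
  replace ((n + a + n2) * (n + a + (- a - n2)))%Z with ((n + a + n2) * (n - n2))%Z in h4 by ring.
  assert (Hv : forall m, 0 <= inv_sq m) by (intros; apply Rlt_le, inv_sq_pos).
  assert (Ht := inv_sq_tail_nonneg L).
  pose proof (Rmult_le_pos _ _ (Ht (n + a)%Z) (Hv n2)). pose proof (Rmult_le_pos _ _ (Ht (n + a)%Z) (Hv (n2 - n)%Z)).
  pose proof (Rmult_le_pos _ _ (Hv (n + a)%Z) (Ht (n2 - n)%Z)).
  pose proof (Rmult_le_pos _ _ (Ht (n + a)%Z) (Hv (n2 + (n + a))%Z)).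
  pose proof (Rmult_le_pos _ _ (Hv (n + a)%Z) (Ht (n2 + (n + a))%Z)).
  unfold kernel_majorant.
  destruct (Z_le_gt_dec n2 0) as [hn2|hn2]; [destruct (Z_le_gt_dec n2 (- a)) as [hn2'|hn2'] |].
  -
    assert (HP := Phi_n3_nonneg_eq n a n2 hn ha hn2'). rewrite HP in hP.
    pose proof (kernel_le_case_factored M n a n2 (- (n2 + (n + a))) HM hn ha ltac:(lia) ltac:(lia)
                  h3 h4 HP hP ltac:(lia)) as Hk.
    rewrite inv_sq_opp, inv_sq_tail_opp in Hk. fold L in Hk. lra.
  - assert (Hk := kernel_le_case_n2_n3_nonpos M n a n2 HM hn ha ltac:(lia) hP). fold L in Hk. lra.
  -
    assert (HP := Phi_n2_pos_eq n a n2 hn ha ltac:(lia)). rewrite HP in hP.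
    pose proof (kernel_le_case_factored M n a n2 (n2 - n) HM hn ha ltac:(lia)
                  ltac:(intro E; apply h4; replace n2 with n by lia; ring)
                  h3 h4 HP hP ltac:(lia)) as Hk. fold L in Hk. lra.
Qed.

(** * Summability of the kernel *)

Lemma inv_le_div A B c : 0 < A -> 0 < B -> B <= c * A -> / A <= c / B.
Proof.
  intros HA HB H. apply (Rmult_le_reg_r B); auto. unfold Rdiv. rewrite Rmult_assoc, Rinv_l by lra.
  apply (Rmult_le_reg_l A); auto. rewrite <- Rmult_assoc, Rinv_r by lra. lra.
Qed.

(* Telescoping primitives: [inv_sq m <= F (m + 1) - F m] with [F] bounded. *)
Definition inv_sq_primitive (m : Z) : R := 6 * IZR m / (IZR (Z.abs m) + 1).
Definition inv_sq_tail_primitive (L : R) (m : Z) : R := 2 / Rmax (1 - IZR m) L - 2 / Rmax (IZR m) L.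

Lemma inv_sq_le_primitive_step m : inv_sq m <= inv_sq_primitive (m + 1) - inv_sq_primitive m.
Proof.
  unfold inv_sq_primitive. destruct (Z_lt_le_dec m 0) as [h|h]; [|destruct (Z.eq_dec m 0) as [e|e]].
  - rewrite inv_sq_nz by lia. rewrite (Z.abs_neq m), (Z.abs_neq (m + 1)) by lia.
    rewrite !opp_IZR, !plus_IZR. assert (Hr : IZR m <= -1) by (apply (IZR_le _ (-1)); lia).
    set (r := IZR m) in *.
    replace (6 * (r + 1) / (- (r + 1) + 1) - 6 * r / (- r + 1)) with (6 / ((- r) * (1 - r)))
      by (field; repeat split; lra).
    apply inv_le_div; nra.
  - subst m. rewrite inv_sq_0. simpl. lra.
  - rewrite inv_sq_nz by lia. rewrite (Z.abs_eq m), (Z.abs_eq (m + 1)) by lia.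
    rewrite !plus_IZR. assert (Hr : 1 <= IZR m) by (apply IZR_le; lia).
    set (r := IZR m) in *.
    replace (6 * (r + 1) / (r + 1 + 1) - 6 * r / (r + 1)) with (6 / ((r + 1) * (r + 2)))
      by (field; repeat split; lra).
    apply inv_le_div; nra.
Qed.

Lemma inv_sq_primitive_bound m : Rabs (inv_sq_primitive m) <= 6.
Proof.
  unfold inv_sq_primitive. rewrite abs_IZR. pose proof (Rabs_pos (IZR m)).
  unfold Rdiv. rewrite !Rabs_mult, Rabs_inv, (Rabs_right 6), (Rabs_right (Rabs (IZR m) + 1)) by lra.
  apply (Rmult_le_reg_r (Rabs (IZR m) + 1)); [lra|]. rewrite Rmult_assoc, Rinv_l by lra. nra.
Qed.

Lemma zsum_inv_sq_le a L : zsum a L inv_sq <= 12.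
Proof.
  eapply Rle_trans; [apply zsum_telescope, inv_sq_le_primitive_step|].
  pose proof (inv_sq_primitive_bound (a + Z.of_nat L + 1)). pose proof (inv_sq_primitive_bound a).
  unfold Rabs in *; repeat destruct Rcase_abs; lra.
Qed.

Lemma two_div_le A B : 0 < A -> A <= B -> 2 / B <= 2 / A.
Proof. intros. unfold Rdiv. apply Rmult_le_compat_l; [lra|]. apply Rinv_le_contravar; lra. Qed.

Lemma inv_sq_tail_le_primitive_step L m : 0 < L ->
  inv_sq_tail L m <= inv_sq_tail_primitive L (m + 1) - inv_sq_tail_primitive L m.
Proof.
  intros HL. unfold inv_sq_tail_primitive. rewrite plus_IZR. set (r := IZR m).
  assert (Hmax : forall u v, u <= v -> 0 < Rmax u L /\ Rmax u L <= Rmax v L)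
    by (intros; split; [apply Rlt_le_trans with L; [lra | apply Rmax_r] | unfold Rmax; repeat destruct Rle_dec; lra]).
  assert (B1 : 2 / Rmax (1 - r) L <= 2 / Rmax (1 - (r + 1)) L)
    by (destruct (Hmax (1 - (r + 1)) (1 - r)); [lra | apply two_div_le; auto]).
  assert (B2 : 2 / Rmax (r + 1) L <= 2 / Rmax r L)
    by (destruct (Hmax r (r + 1)); [lra | apply two_div_le; auto]).
  unfold inv_sq_tail. destruct Rle_dec as [h|h]; [|lra].
  rewrite abs_IZR in h. fold r in h.
  assert (hm : m <> 0%Z) by (intro; subst; unfold r in h; simpl in h; rewrite Rabs_R0 in h; lra).
  rewrite inv_sq_nz by auto. fold r.
  destruct (Rle_dec 0 r).
  - rewrite Rabs_right in h by lra.
    rewrite (Rmax_left r L), (Rmax_left (r + 1) L) by lra.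
    assert (1 <= r) by (apply IZR_le; assert (0 < m)%Z by (apply lt_IZR; unfold r in *; simpl; lra); lia).
    assert (2 / r - 2 / (r + 1) = 2 / (r * (r + 1))) by (field; repeat split; lra).
    assert (/ r ^ 2 <= 2 / (r * (r + 1))) by (apply inv_le_div; nra). lra.
  - rewrite Rabs_left in h by lra.
    rewrite (Rmax_left (1 - (r + 1)) L), (Rmax_left (1 - r) L) by lra.
    assert (r <= -1) by (apply (IZR_le _ (-1)); assert (m < 0)%Z by (apply lt_IZR; unfold r in *; simpl; lra); lia).
    assert (2 / (1 - (r + 1)) - 2 / (1 - r) = 2 / ((- r) * (1 - r))) by (field; repeat split; lra).
    assert (/ r ^ 2 <= 2 / ((- r) * (1 - r))) by (apply inv_le_div; nra). lra.
Qed.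

Lemma inv_sq_tail_primitive_bound L m : 0 < L -> Rabs (inv_sq_tail_primitive L m) <= 2 / L.
Proof.
  intros HL. unfold inv_sq_tail_primitive.
  assert (Hpos : forall u, 0 < 2 / Rmax u L /\ 2 / Rmax u L <= 2 / L).
  { intros u. assert (0 < Rmax u L) by (apply Rlt_le_trans with L; [lra | apply Rmax_r]).
    split; [apply Rdiv_lt_0_compat; lra | apply two_div_le; auto; apply Rmax_r]. }
  destruct (Hpos (1 - IZR m)), (Hpos (IZR m)). unfold Rabs; destruct Rcase_abs; lra.
Qed.

Lemma zsum_inv_sq_tail_le a N L : 0 < L -> zsum a N (inv_sq_tail L) <= 4 / L.
Proof.
  intros HL. eapply Rle_trans; [apply zsum_telescope; intros; apply inv_sq_tail_le_primitive_step; auto|].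
  pose proof (inv_sq_tail_primitive_bound L (a + Z.of_nat N + 1) HL).
  pose proof (inv_sq_tail_primitive_bound L a HL).
  replace (4 / L) with (2 / L + 2 / L) by (field; lra). unfold Rabs in *; repeat destruct Rcase_abs; lra.
Qed.

Lemma zsum2_product_le a l b l' (u v : Z -> R) (c : Z -> Z) Bu Bv :
  (forall m, 0 <= u m) -> (forall m, 0 <= v m) ->
  (forall a l, zsum a l u <= Bu) -> (forall a l, zsum a l v <= Bv) ->
  zsum a l (fun i => zsum b l' (fun j => u i * v (j + c i)%Z)) <= Bu * Bv.
Proof.
  intros Hu Hv HBu HBv.
  assert (HBv0 : 0 <= Bv) by (eapply Rle_trans; [apply (zsum_nonneg 0 0 v Hv) | apply HBv]).
  apply Rle_trans with (zsum a l (fun i => Bv * u i)).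
  - apply zsum_le. intros i. rewrite zsum_scal, zsum_shift.
    specialize (HBv (b + c i)%Z l'). specialize (Hu i). nra.
  - rewrite zsum_scal. specialize (HBu a l). pose proof (zsum_nonneg a l u Hu). nra.
Qed.

Definition kernel_bound (M : R) : R := 960 / sqrt (M / 2).

Lemma kernel_bound_pos M : 1 <= M -> 0 < kernel_bound M.
Proof. intros. apply Rdiv_lt_0_compat; [lra | apply sqrt_lt_R0; lra]. Qed.

Lemma zsum2_kernel_le M n a l b l' : 1 <= M ->
  zsum a l (fun n1 => zsum b l' (fun n2 => kernel M n n1 n2)) <= kernel_bound M.
Proof.
  intros HM. set (L := sqrt (M / 2)). assert (HL : 0 < L) by (apply sqrt_lt_R0; lra).
  assert (Hv : forall m, 0 <= inv_sq m) by (intros; apply Rlt_le, inv_sq_pos).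
  assert (Ht : forall m, 0 <= inv_sq_tail L m) by (intros; apply inv_sq_tail_nonneg).
  assert (Sv : forall a l, zsum a l inv_sq <= 12) by apply zsum_inv_sq_le.
  assert (St : forall a l, zsum a l (inv_sq_tail L) <= 4 / L) by (intros; apply zsum_inv_sq_tail_le; auto).
  eapply Rle_trans; [apply zsum_le; intros n1; apply zsum_le; intros n2; apply kernel_le_majorant; auto|].
  fold L. unfold kernel_majorant.
  rewrite (zsum_ext a l _ (fun n1 => 4 * (
     zsum b l' (fun n2 => inv_sq_tail L n1 * inv_sq (n2 + 0)) + zsum b l' (fun n2 => inv_sq_tail L n1 * inv_sq (n2 + - n))
   + zsum b l' (fun n2 => inv_sq n1 * inv_sq_tail L (n2 + - n)) + zsum b l' (fun n2 => inv_sq_tail L n1 * inv_sq (n2 + n1))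
   + zsum b l' (fun n2 => inv_sq n1 * inv_sq_tail L (n2 + n1))))).
  2:{ intros n1. rewrite <- !zsum_plus, <- zsum_scal. apply zsum_ext; intros n2.
      replace (n2 + 0)%Z with n2 by lia. replace (n2 + - n)%Z with (n2 - n)%Z by lia. ring. }
  rewrite zsum_scal, !zsum_plus.
  pose proof (zsum2_product_le a l b l' _ _ (fun _ => 0%Z) _ _ Ht Hv St Sv).
  pose proof (zsum2_product_le a l b l' _ _ (fun _ => (- n)%Z) _ _ Ht Hv St Sv).
  pose proof (zsum2_product_le a l b l' _ _ (fun _ => (- n)%Z) _ _ Hv Ht Sv St).
  pose proof (zsum2_product_le a l b l' _ _ (fun i => i) _ _ Ht Hv St Sv).
  pose proof (zsum2_product_le a l b l' _ _ (fun i => i) _ _ Hv Ht Sv St).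
  cbv beta in *. unfold kernel_bound. fold L.
  replace (960 / L) with (4 * (5 * (4 / L * 12))) by (field; lra). lra.
Qed.

(** * Double series *)

Lemma sq_partial_fst F K : fst (sq_partial F K) = dsum K (fun i j => fst (F i j)).
Proof.
  unfold sq_partial, dsum, symsum, zsum; simpl. apply sum_eq; intros. apply sum_eq; intros.
  f_equal; f_equal; lia.
Qed.
Lemma sq_partial_snd F K : snd (sq_partial F K) = dsum K (fun i j => snd (F i j)).
Proof.
  unfold sq_partial, dsum, symsum, zsum; simpl. apply sum_eq; intros. apply sum_eq; intros.
  f_equal; f_equal; lia.
Qed.

Lemma Cmod_sq_partial_le F K : Cmod (sq_partial F K) <= dsum K (fun i j => Cmod (F i j)).
Proof.
  unfold Cmod at 1, Cmod2. rewrite sq_partial_fst, sq_partial_snd.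
  eapply Rle_trans; [apply zsum_Minkowski2|]. apply zsum_le; intros i.
  eapply Rle_trans; [apply zsum_Minkowski2|]. apply zsum_le; intros j. unfold Cmod, Cmod2. lra.
Qed.

Definition abs_summable2 (F : Z -> Z -> Cx) : Prop :=
  exists B, forall K, dsum K (fun i j => Cmod (F i j)) <= B.

Lemma abs_summable2_add F G : abs_summable2 F -> abs_summable2 G ->
  abs_summable2 (fun i j => Cadd (F i j) (G i j)).
Proof.
  intros [B1 H1] [B2 H2]. exists (B1 + B2). intros K.
  eapply Rle_trans; [apply dsum_le; intros; apply Cmod_add|]. rewrite dsum_plus.
  specialize (H1 K); specialize (H2 K); lra.
Qed.

(* Real and imaginary parts split as [(part + |F|) - |F|], two nondecreasing bounded sequences. *)
Lemma dsum_part_cv (F : Z -> Z -> Cx) (part : Cx -> R) :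
  (forall z, Rabs (part z) <= Cmod z) -> abs_summable2 F ->
  exists l, Un_cv (fun K => dsum K (fun i j => part (F i j))) l.
Proof.
  intros Hp [B HB].
  assert (H0 : forall i j, 0 <= part (F i j) + Cmod (F i j)).
  { intros. specialize (Hp (F i j)). unfold Rabs in Hp; destruct Rcase_abs; lra. }
  assert (H1 : forall i j, 0 <= Cmod (F i j)) by (intros; apply Cmod_nonneg).
  assert (Hmono : forall (u : nat -> R) C, (forall K, u K <= u (S K)) -> (forall K, u K <= C) ->
                    exists l, Un_cv u l).
  { intros u C Hu HC. destruct (growing_cv u Hu) as [l Hl]; [exists C; intros x [i ->]; auto | eauto]. }
  destruct (Hmono (fun K => dsum K (fun i j => part (F i j) + Cmod (F i j))) (2 * B)) as [l1 Hl1].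
  { intros; apply dsum_le_S; auto. }
  { intros K. specialize (HB K). rewrite dsum_plus.
    assert (dsum K (fun i j => part (F i j)) <= dsum K (fun i j => Cmod (F i j))).
    { apply dsum_le; intros. specialize (Hp (F i j)). unfold Rabs in Hp; destruct Rcase_abs; lra. }
    lra. }
  destruct (Hmono (fun K => dsum K (fun i j => Cmod (F i j))) B) as [l2 Hl2]; auto.
  { intros; apply dsum_le_S; auto. }
  exists (l1 - l2). intros eps Heps.
  destruct (CV_minus _ _ _ _ Hl1 Hl2 eps Heps) as [N HN]. exists N. intros k Hk.
  specialize (HN k Hk). rewrite dsum_plus in HN.
  replace (dsum k (fun i j => part (F i j)) + dsum k (fun i j => Cmod (F i j)) - dsum k (fun i j => Cmod (F i j)))
    with (dsum k (fun i j => part (F i j))) in HN by ring. auto.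
Qed.

Lemma Csum2_spec F : abs_summable2 F ->
  Un_cv (fun K => fst (sq_partial F K)) (fst (Csum2 F)) /\
  Un_cv (fun K => snd (sq_partial F K)) (snd (Csum2 F)).
Proof.
  intros HF. unfold Csum2. apply epsilon_spec.
  destruct (dsum_part_cv F fst Rabs_fst_le_Cmod HF) as [l1 H1].
  destruct (dsum_part_cv F snd Rabs_snd_le_Cmod HF) as [l2 H2].
  exists (l1, l2). split; intros eps He.
  - destruct (H1 eps He) as [N HN]; exists N; intros; rewrite sq_partial_fst; auto.
  - destruct (H2 eps He) as [N HN]; exists N; intros; rewrite sq_partial_snd; auto.
Qed.

Lemma Csum2_add F G : abs_summable2 F -> abs_summable2 G ->
  Csum2 (fun i j => Cadd (F i j) (G i j)) = Cadd (Csum2 F) (Csum2 G).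
Proof.
  intros HF HG.
  destruct (Csum2_spec F HF) as [F1 F2]. destruct (Csum2_spec G HG) as [G1 G2].
  destruct (Csum2_spec _ (abs_summable2_add F G HF HG)) as [S1 S2].
  assert (E : forall (part : Cx -> R) K, (forall z w, part (Cadd z w) = part z + part w) ->
            dsum K (fun i j => part (Cadd (F i j) (G i j)))
            = dsum K (fun i j => part (F i j)) + dsum K (fun i j => part (G i j))).
  { intros part K Hpart. rewrite <- dsum_plus. apply dsum_ext; auto. }
  apply injective_projections; unfold Cadd at 2; simpl.
  - apply (UL_sequence _ _ _ S1). intros eps He.
    destruct (CV_plus _ _ _ _ F1 G1 eps He) as [N HN]. exists N; intros k Hk.
    rewrite !sq_partial_fst, (E fst) by reflexivity. rewrite <- !sq_partial_fst. apply HN; auto.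
  - apply (UL_sequence _ _ _ S2). intros eps He.
    destruct (CV_plus _ _ _ _ F2 G2 eps He) as [N HN]. exists N; intros k Hk.
    rewrite !sq_partial_snd, (E snd) by reflexivity. rewrite <- !sq_partial_snd. apply HN; auto.
Qed.

(** * The trilinear estimate *)

(* The trilinear form behind [N_0]: [N_0[w](t) = trilinear M t (w t) (w t) (w t)], summing over [(n1, n2)]
   with [n3 = n - n1 - n2] and [w^*(n3) = conj (w (n1 + n2 - n))]. *)
Definition triple (f g h : Z -> Cx) (n n1 n2 : Z) : Cx :=
  Cmul (Cmul (f n1) (g n2)) (Cconj (h (n1 + n2 - n)%Z)).

Definition tri_summand (M t : R) (f g h : Z -> Cx) (n n1 n2 : Z) : Cx :=
  Cmul (resonant_coef M t n n1 n2) (triple f g h n n1 n2).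

Definition trilinear (M t : R) (f g h : Z -> Cx) (n : Z) : Cx :=
  if (0 <? n)%Z then Csum2 (tri_summand M t f g h n) else C0.

Definition triple_dens (s : R) (f g h : Z -> Cx) (n n1 n2 : Z) : R :=
  l2s_dens s f n1 * l2s_dens s g n2 * l2s_dens s h (n1 + n2 - n).

Lemma Cmod_tri_summand M t f g h n n1 n2 : 0 <= M ->
  Cmod (tri_summand M t f g h n n1 n2)
  = sqrt (kernel M n n1 n2) * (Cmod (f n1) * Cmod (g n2) * Cmod (h (n1 + n2 - n)%Z)).
Proof.
  intros HM. unfold tri_summand, triple. rewrite !Cmod_mul, Cmod_conj, Cmod_resonant_coef; auto.
Qed.

Lemma triple_dens_nonneg s f g h n n1 n2 : 0 <= s -> 0 <= triple_dens s f g h n n1 n2.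
Proof.
  intros Hs. unfold triple_dens.
  pose proof (l2s_dens_nonneg s f n1 Hs). pose proof (l2s_dens_nonneg s g n2 Hs).
  pose proof (l2s_dens_nonneg s h (n1 + n2 - n) Hs). apply Rmult_le_pos; [apply Rmult_le_pos|]; auto.
Qed.

Definition weight3 (s : R) (n n1 n2 : Z) : R := jbr2s s n1 * jbr2s s n2 * jbr2s s (n1 + n2 - n).

Lemma weight3_ge1 s n n1 n2 : 0 <= s -> 1 <= weight3 s n n1 n2.
Proof.
  intros Hs. unfold weight3. pose proof (jbr2s_ge1 s n1 Hs). pose proof (jbr2s_ge1 s n2 Hs).
  pose proof (jbr2s_ge1 s (n1 + n2 - n) Hs). assert (1 <= jbr2s s n1 * jbr2s s n2) by nra. nra.
Qed.

(* The output weight [<n>^(2s)] is absorbed by [<n1>^(2s)], since the kernel forces [0 < n < n1]. *)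
Lemma weighted_kernel_le s M n n1 n2 : 0 <= s -> 1 <= M ->
  jbr2s s n * (kernel M n n1 n2 / weight3 s n n1 n2) <= kernel M n n1 n2.
Proof.
  intros Hs HM. pose proof (weight3_ge1 s n n1 n2 Hs) as HW.
  destruct (Z_lt_le_dec 0 n) as [hn|hn]; [|rewrite kernel_off_support by lia; unfold Rdiv; lra].
  destruct (Z_lt_le_dec n n1) as [h1|h1]; [|rewrite kernel_off_support by lia; unfold Rdiv; lra].
  assert (Hle : jbr2s s n <= weight3 s n n1 n2).
  { unfold weight3. pose proof (jbr2s_le s n n1 Hs ltac:(lia)).
    pose proof (jbr2s_ge1 s n2 Hs). pose proof (jbr2s_ge1 s (n1 + n2 - n) Hs). pose proof (jbr2s_ge1 s n1 Hs).
    assert (jbr2s s n1 <= jbr2s s n1 * jbr2s s n2) by nra. nra. }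
  pose proof (jbr2s_nonneg s n Hs). pose proof (kernel_nonneg M n n1 n2 ltac:(lra)).
  replace (jbr2s s n * (kernel M n n1 n2 / weight3 s n n1 n2))
    with (jbr2s s n / weight3 s n n1 n2 * kernel M n n1 n2) by (field; lra).
  rewrite <- (Rmult_1_l (kernel M n n1 n2)) at 2. apply Rmult_le_compat_r; auto.
  apply Rdiv_le_of_le_mul; lra.
Qed.

(* Cauchy-Schwarz with the weight [weight3] moved from the sequences onto the kernel. *)
Lemma dsum_tri_summand_sq_le s M t f g h n K : 0 <= s -> 1 <= M ->
  jbr2s s n * dsum K (fun n1 n2 => Cmod (tri_summand M t f g h n n1 n2)) ^ 2
  <= kernel_bound M * dsum K (triple_dens s f g h n).
Proof.
  intros Hs HM.
  assert (HW : forall n1 n2, 0 < weight3 s n n1 n2) by (intros; pose proof (weight3_ge1 s n n1 n2 Hs); lra).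
  assert (HK : forall n1 n2, 0 <= kernel M n n1 n2 / weight3 s n n1 n2)
    by (intros; apply Rmult_le_pos; [apply kernel_nonneg; lra | apply Rlt_le, Rinv_0_lt_compat; auto]).
  set (u := fun n1 n2 => sqrt (kernel M n n1 n2 / weight3 s n n1 n2)).
  set (v := fun n1 n2 => sqrt (weight3 s n n1 n2) * (Cmod (f n1) * Cmod (g n2) * Cmod (h (n1 + n2 - n)%Z))).
  assert (Hu : forall i j, 0 <= u i j) by (intros; apply sqrt_pos).
  assert (Hv : forall i j, 0 <= v i j).
  { intros; unfold v. pose proof (Cmod_nonneg (f i)); pose proof (Cmod_nonneg (g j)).
    pose proof (Cmod_nonneg (h (i + j - n)%Z)). pose proof (sqrt_pos (weight3 s n i j)).
    repeat apply Rmult_le_pos; auto. }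
  assert (Euv : forall i j, Cmod (tri_summand M t f g h n i j) = u i j * v i j).
  { intros i j. rewrite Cmod_tri_summand by lra. unfold u, v.
    symmetry. rewrite <- Rmult_assoc, <- sqrt_mult by (auto; apply Rlt_le; auto).
    do 2 f_equal. field. pose proof (HW i j); lra. }
  assert (Eu : forall i j, u i j ^ 2 = kernel M n i j / weight3 s n i j)
    by (intros; unfold u; rewrite <- Rsqr_pow2, Rsqr_sqrt; auto).
  assert (Ev : forall i j, v i j ^ 2 = triple_dens s f g h n i j).
  { intros i j. unfold v, triple_dens, l2s_dens, weight3. rewrite <- !Cmod_sq.
    rewrite Rpow_mult_distr, <- Rsqr_pow2, Rsqr_sqrt; [ring|]. pose proof (HW i j). unfold weight3 in *; lra. }
  assert (HCS := dsum_Cauchy_Schwarz K u v Hu Hv).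
  rewrite (dsum_ext K _ _ Eu), (dsum_ext K _ _ Ev), <- (dsum_ext K _ _ Euv) in HCS.
  set (X := dsum K (fun i j => kernel M n i j / weight3 s n i j)) in *.
  set (G := dsum K (triple_dens s f g h n)) in *.
  assert (HX : 0 <= X) by (apply dsum_nonneg; auto).
  assert (HG : 0 <= G) by (apply dsum_nonneg; intros; apply triple_dens_nonneg; auto).
  assert (HXr : jbr2s s n * X <= kernel_bound M).
  { unfold X. rewrite <- dsum_scal. eapply Rle_trans; [apply dsum_le; intros; apply weighted_kernel_le; auto|].
    apply zsum2_kernel_le; auto. }
  assert (Hsq : dsum K (fun n1 n2 => Cmod (tri_summand M t f g h n n1 n2)) ^ 2 <= X * G).
  { eapply Rle_trans; [apply pow_incr; split; [apply dsum_nonneg; intros; apply Cmod_nonneg | exact HCS]|].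
    rewrite Rpow_mult_distr, <- !Rsqr_pow2, !Rsqr_sqrt; auto. lra. }
  pose proof (jbr2s_nonneg s n Hs).
  apply Rle_trans with (jbr2s s n * (X * G)); [apply Rmult_le_compat_l; auto|].
  rewrite <- Rmult_assoc. apply Rmult_le_compat_r; auto.
Qed.

Lemma dsum_triple_dens_le s f g h n K : 0 <= s -> in_l2s s f -> in_l2s s g -> in_l2s s h ->
  dsum K (triple_dens s f g h n) <= l2s_norm s f ^ 2 * l2s_norm s g ^ 2 * l2s_norm s h ^ 2.
Proof.
  intros Hs Hf Hg Hh. unfold dsum, symsum, triple_dens.
  assert (Hd : forall k m, 0 <= l2s_dens s k m) by (intros; apply l2s_dens_nonneg; auto).
  assert (HA := zsum_l2s_dens_le s f (- Z.of_nat K) (2 * K) Hs Hf).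
  assert (HB := zsum_l2s_dens_le s g (- Z.of_nat K) (2 * K) Hs Hg).
  assert (HC : forall m, l2s_dens s h m <= l2s_norm s h ^ 2) by (intros; apply l2s_dens_le; auto).
  set (A := l2s_norm s f ^ 2) in *. set (B := l2s_norm s g ^ 2) in *. set (C := l2s_norm s h ^ 2) in *.
  assert (HC0 : 0 <= C) by (eapply Rle_trans; [apply (Hd h 0%Z) | apply HC]).
  assert (HB0 : 0 <= B) by (eapply Rle_trans; [apply zsum_nonneg, Hd | apply HB]).
  apply Rle_trans with (zsum (- Z.of_nat K) (2 * K) (fun n1 => (C * B) * l2s_dens s f n1)).
  - apply zsum_le; intros n1.
    apply Rle_trans with (zsum (- Z.of_nat K) (2 * K) (fun n2 => C * (l2s_dens s f n1 * l2s_dens s g n2))).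
    + apply zsum_le; intros n2. rewrite (Rmult_comm C).
      apply Rmult_le_compat_l; [apply Rmult_le_pos; apply Hd | apply HC].
    + rewrite !zsum_scal. pose proof (Hd f n1). assert (0 <= C * l2s_dens s f n1) by nra. nra.
  - rewrite zsum_scal. replace (A * B * C) with ((C * B) * A) by ring.
    apply Rmult_le_compat_l; nra.
Qed.

(* Young's inequality [l^1 * l^1 * l^1 -> l^1] for the densities: summing over [n] frees the third factor. *)
Lemma symsum_dsum_triple_dens_le s f g h N K : 0 <= s -> in_l2s s f -> in_l2s s g -> in_l2s s h ->
  symsum N (fun n => dsum K (triple_dens s f g h n))
  <= l2s_norm s f ^ 2 * l2s_norm s g ^ 2 * l2s_norm s h ^ 2.
Proof.
  intros Hs Hf Hg Hh. unfold dsum, symsum, triple_dens.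
  rewrite zsum_swap.
  rewrite (zsum_ext _ _ _ (fun n1 => zsum (- Z.of_nat K) (2 * K) (fun n2 =>
     zsum (- Z.of_nat N) (2 * N) (fun n => l2s_dens s f n1 * l2s_dens s g n2 * l2s_dens s h (n1 + n2 - n)%Z))))
    by (intros; apply zsum_swap).
  assert (Hd : forall k m, 0 <= l2s_dens s k m) by (intros; apply l2s_dens_nonneg; auto).
  assert (HA := zsum_l2s_dens_le s f (- Z.of_nat K) (2 * K) Hs Hf).
  assert (HB := zsum_l2s_dens_le s g (- Z.of_nat K) (2 * K) Hs Hg).
  assert (HC : forall a l, zsum a l (l2s_dens s h) <= l2s_norm s h ^ 2) by (intros; apply zsum_l2s_dens_le; auto).
  set (A := l2s_norm s f ^ 2) in *. set (B := l2s_norm s g ^ 2) in *. set (C := l2s_norm s h ^ 2) in *.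
  assert (HC0 : 0 <= C) by (eapply Rle_trans; [apply zsum_nonneg, Hd | apply (HC 0%Z 0%nat)]).
  assert (HB0 : 0 <= B) by (eapply Rle_trans; [apply zsum_nonneg, Hd | apply HB]).
  apply Rle_trans with (zsum (- Z.of_nat K) (2 * K) (fun n1 => (C * B) * l2s_dens s f n1)).
  - apply zsum_le; intros n1.
    apply Rle_trans with (zsum (- Z.of_nat K) (2 * K) (fun n2 => C * (l2s_dens s f n1 * l2s_dens s g n2))).
    + apply zsum_le; intros n2. rewrite zsum_scal, zsum_reflect, (Rmult_comm C).
      apply Rmult_le_compat_l; [apply Rmult_le_pos; apply Hd | apply HC].
    + rewrite !zsum_scal. pose proof (Hd f n1). assert (0 <= C * l2s_dens s f n1) by nra. nra.
  - rewrite zsum_scal. replace (A * B * C) with ((C * B) * A) by ring.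
    apply Rmult_le_compat_l; nra.
Qed.

Lemma dsum_Cmod_tri_summand_le s M t f g h n K : 0 <= s -> 1 <= M ->
  in_l2s s f -> in_l2s s g -> in_l2s s h ->
  dsum K (fun n1 n2 => Cmod (tri_summand M t f g h n n1 n2))
  <= sqrt (kernel_bound M * (l2s_norm s f ^ 2 * l2s_norm s g ^ 2 * l2s_norm s h ^ 2)).
Proof.
  intros Hs HM Hf Hg Hh.
  pose proof (jbr2s_ge1 s n Hs). pose proof (kernel_bound_pos M HM).
  pose proof (dsum_tri_summand_sq_le s M t f g h n K Hs HM) as Hsq.
  pose proof (dsum_triple_dens_le s f g h n K Hs Hf Hg Hh) as Hd.
  set (S := dsum K (fun n1 n2 => Cmod (tri_summand M t f g h n n1 n2))) in *.
  assert (HS : 0 <= S) by (apply dsum_nonneg; intros; apply Cmod_nonneg).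
  rewrite <- (sqrt_pow2 S HS). apply sqrt_le_1_alt.
  assert (0 <= S ^ 2) by nra. nra.
Qed.

Lemma tri_summand_abs_summable s M t f g h n : 0 <= s -> 1 <= M ->
  in_l2s s f -> in_l2s s g -> in_l2s s h -> abs_summable2 (tri_summand M t f g h n).
Proof. intros. eexists. intros K. apply dsum_Cmod_tri_summand_le; eauto. Qed.

Lemma trilinear_dens_le s M t f g h N : 0 <= s -> 1 <= M ->
  in_l2s s f -> in_l2s s g -> in_l2s s h ->
  symsum N (l2s_dens s (trilinear M t f g h))
  <= kernel_bound M * (l2s_norm s f ^ 2 * l2s_norm s g ^ 2 * l2s_norm s h ^ 2).
Proof.
  intros Hs HM Hf Hg Hh.
  set (partial := fun n K =>
         jbr2s s n * Cmod2 (if (0 <? n)%Z then sq_partial (tri_summand M t f g h n) K else C0)).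
  assert (Hcv : forall n, Un_cv (partial n) (l2s_dens s (trilinear M t f g h) n)).
  { intros n. unfold partial, l2s_dens, trilinear. destruct (0 <? n)%Z.
    - destruct (Csum2_spec _ (tri_summand_abs_summable s M t f g h n Hs HM Hf Hg Hh)) as [H1 H2].
      apply CV_mult; [intros eps He; exists 0%nat; intros; unfold Rdist; rewrite Rminus_diag, Rabs_R0; auto|].
      apply Cmod2_cv; auto.
    - intros eps He. exists 0%nat. intros. unfold Rdist. rewrite Rminus_diag, Rabs_R0. auto. }
  apply Rle_cv_lim with (Un := fun K => symsum N (fun n => partial n K))
    (Vn := fun _ => kernel_bound M * (l2s_norm s f ^ 2 * l2s_norm s g ^ 2 * l2s_norm s h ^ 2)).
  - intros K. pose proof (kernel_bound_pos M HM).
    apply Rle_trans with (symsum N (fun n => kernel_bound M * dsum K (triple_dens s f g h n))).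
    + apply zsum_le; intros n. unfold partial. destruct (0 <? n)%Z.
      * eapply Rle_trans; [|apply dsum_tri_summand_sq_le; auto].
        apply Rmult_le_compat_l; [apply jbr2s_nonneg; auto|].
        rewrite <- Cmod_sq. apply pow_incr. split; [apply Cmod_nonneg | apply Cmod_sq_partial_le].
      * rewrite Cmod2_C0, Rmult_0_r. apply Rmult_le_pos; [lra|].
        apply dsum_nonneg; intros; apply triple_dens_nonneg; auto.
    + unfold symsum. rewrite zsum_scal. apply Rmult_le_compat_l; [lra|].
      apply symsum_dsum_triple_dens_le; auto.
  - apply zsum_cv, Hcv.
  - intros eps He. exists 0%nat. intros. unfold Rdist. rewrite Rminus_diag, Rabs_R0. auto.
Qed.

Lemma trilinear_l2s_bound s M t f g h : 0 <= s -> 1 <= M ->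
  in_l2s s f -> in_l2s s g -> in_l2s s h ->
  in_l2s s (trilinear M t f g h) /\
  l2s_norm s (trilinear M t f g h) <= sqrt (kernel_bound M) * (l2s_norm s f * l2s_norm s g * l2s_norm s h).
Proof.
  intros Hs HM Hf Hg Hh. split.
  - eapply in_l2s_of_bound. intros N. apply trilinear_dens_le; auto.
  - eapply Rle_trans; [apply l2s_norm_le; intros N; apply trilinear_dens_le; auto|].
    pose proof (kernel_bound_pos M HM).
    pose proof (l2s_norm_nonneg s f). pose proof (l2s_norm_nonneg s g). pose proof (l2s_norm_nonneg s h).
    rewrite sqrt_mult by first [lra | apply Rmult_le_pos; [apply Rmult_le_pos|]; apply pow2_ge_0].
    apply Rmult_le_compat_l; [apply sqrt_pos|].
    replace (l2s_norm s f ^ 2 * l2s_norm s g ^ 2 * l2s_norm s h ^ 2)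
      with ((l2s_norm s f * l2s_norm s g * l2s_norm s h) ^ 2) by ring.
    rewrite sqrt_pow2; [lra | repeat apply Rmult_le_pos; auto].
Qed.

Lemma calN0_eq_trilinear M w t : calN0 M w t = trilinear M t (w t) (w t) (w t).
Proof.
  apply functional_extensionality; intros n. unfold calN0, trilinear. destruct (0 <? n)%Z; auto.
  f_equal. apply functional_extensionality; intros n1. apply functional_extensionality; intros n2.
  unfold N0_term, tri_summand, resonant_coef, triple, wstar.
  replace (- (n - n1 - n2))%Z with (n1 + n2 - n)%Z by ring.
  destruct Rlt_dec; [apply Cmul_assoc | symmetry; apply Cmul_C0_l].
Qed.

Lemma triple_sub u v n n1 n2 :
  Csub (triple u u u n n1 n2) (triple v v v n n1 n2)
  = Cadd (Cadd (triple (fun m => Csub (u m) (v m)) u u n n1 n2) (triple v (fun m => Csub (u m) (v m)) u n n1 n2))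
         (triple v v (fun m => Csub (u m) (v m)) n n1 n2).
Proof.
  unfold triple. destruct (u n1), (u n2), (u (n1 + n2 - n)%Z), (v n1), (v n2), (v (n1 + n2 - n)%Z).
  unfold Csub, Cadd, Cmul, Cconj, Copp; simpl. f_equal; ring.
Qed.

Lemma trilinear_sub s M t u v n : 0 <= s -> 1 <= M -> in_l2s s u -> in_l2s s v ->
  Csub (trilinear M t u u u n) (trilinear M t v v v n)
  = Cadd (Cadd (trilinear M t (fun m => Csub (u m) (v m)) u u n) (trilinear M t v (fun m => Csub (u m) (v m)) u n))
         (trilinear M t v v (fun m => Csub (u m) (v m)) n).
Proof.
  intros Hs HM Hu Hv. set (d := fun m => Csub (u m) (v m)).
  assert (Hd : in_l2s s d) by exact (proj1 (l2s_triangle s u v d Hs Hu Hv (fun m => Cmod_sub _ _))).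
  unfold trilinear. destruct (0 <? n)%Z.
  2:{ unfold Csub, Cadd, Copp, C0; simpl. f_equal; ring. }
  assert (HS := fun f g h Hf Hg Hh => tri_summand_abs_summable s M t f g h n Hs HM Hf Hg Hh).
  assert (E : tri_summand M t u u u n = fun i j =>
            Cadd (Cadd (Cadd (tri_summand M t v v v n i j) (tri_summand M t d u u n i j))
                       (tri_summand M t v d u n i j)) (tri_summand M t v v d n i j)).
  { apply functional_extensionality; intros i. apply functional_extensionality; intros j.
    unfold tri_summand.
    replace (triple u u u n i j)
      with (Cadd (triple v v v n i j) (Csub (triple u u u n i j) (triple v v v n i j)))
      by (unfold Cadd, Csub, Copp; destruct (triple u u u n i j), (triple v v v n i j); simpl; f_equal; ring).
    rewrite triple_sub. fold d.
    destruct (resonant_coef M t n i j), (triple v v v n i j), (triple d u u n i j), (triple v d u n i j),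
      (triple v v d n i j).
    unfold Cadd, Cmul; simpl. f_equal; ring. }
  rewrite E, !Csum2_add by (repeat apply abs_summable2_add; auto).
  set (a := Csum2 (tri_summand M t v v v n)).
  destruct a, (Csum2 (tri_summand M t d u u n)), (Csum2 (tri_summand M t v d u n)),
    (Csum2 (tri_summand M t v v d n)).
  unfold Csub, Cadd, Copp; simpl. f_equal; ring.
Qed.

Lemma N0_l2s_bound_at s M w t : 0 <= s -> 1 <= M -> in_l2s s (w t) ->
  l2s_norm s (calN0 M w t) <= sqrt (kernel_bound M) * l2s_norm s (w t) ^ 3.
Proof.
  intros Hs HM Hw. rewrite calN0_eq_trilinear.
  replace (l2s_norm s (w t) ^ 3) with (l2s_norm s (w t) * l2s_norm s (w t) * l2s_norm s (w t)) by ring.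
  apply trilinear_l2s_bound; auto.
Qed.

Lemma N0_sub_l2s_bound_at s M w wt t : 0 <= s -> 1 <= M -> in_l2s s (w t) -> in_l2s s (wt t) ->
  l2s_norm s (fun n => Csub (calN0 M w t n) (calN0 M wt t n))
  <= sqrt (kernel_bound M) * (2 * (l2s_norm s (w t) ^ 2 + l2s_norm s (wt t) ^ 2)
                              * l2s_norm s (fun n => Csub (w t n) (wt t n))).
Proof.
  intros Hs HM Hw Hwt. set (d := fun n => Csub (w t n) (wt t n)).
  assert (Hd : in_l2s s d) by exact (proj1 (l2s_triangle s _ _ d Hs Hw Hwt (fun m => Cmod_sub _ _))).
  rewrite !calN0_eq_trilinear.
  rewrite (functional_extensionality _ _ (fun n => trilinear_sub s M t (w t) (wt t) n Hs HM Hw Hwt)). fold d.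
  destruct (trilinear_l2s_bound s M t d (w t) (w t) Hs HM Hd Hw Hw) as [H1 B1].
  destruct (trilinear_l2s_bound s M t (wt t) d (w t) Hs HM Hwt Hd Hw) as [H2 B2].
  destruct (trilinear_l2s_bound s M t (wt t) (wt t) d Hs HM Hwt Hwt Hd) as [H3 B3].
  destruct (l2s_triangle s _ _ (fun n => Cadd (trilinear M t d (w t) (w t) n) (trilinear M t (wt t) d (w t) n))
              Hs H1 H2 (fun n => Cmod_add _ _)) as [H12 B12].
  destruct (l2s_triangle s _ _ (fun n => Cadd (Cadd (trilinear M t d (w t) (w t) n) (trilinear M t (wt t) d (w t) n))
                                             (trilinear M t (wt t) (wt t) d n))
              Hs H12 H3 (fun n => Cmod_add _ _)) as [_ B123].
  eapply Rle_trans; [exact B123|].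
  pose proof (l2s_norm_nonneg s (w t)). pose proof (l2s_norm_nonneg s (wt t)). pose proof (l2s_norm_nonneg s d).
  set (a := l2s_norm s (w t)) in *. set (b := l2s_norm s (wt t)) in *. set (c := l2s_norm s d) in *.
  set (k := sqrt (kernel_bound M)) in *. assert (Hk : 0 <= k) by apply sqrt_pos.
  assert (Habc : c * a * a + b * c * a + b * b * c <= 2 * (a ^ 2 + b ^ 2) * c).
  { assert (0 <= c * (a - b) ^ 2) by (apply Rmult_le_pos; [auto | apply pow2_ge_0]). nra. }
  assert (0 <= k * (2 * (a ^ 2 + b ^ 2) * c - (c * a * a + b * c * a + b * b * c))) by nra.
  lra.
Qed.

Lemma sqrt_kernel_bound M : 1 <= M -> sqrt (kernel_bound M) = sqrt (960 * sqrt 2) * Rpower M (- / 4).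
Proof.
  intros HM. unfold kernel_bound.
  assert (HM4 : Rpower M (- / 4) = / sqrt (sqrt M)).
  { rewrite Rpower_Ropp. f_equal.
    rewrite <- (Rpower_sqrt M), <- (Rpower_sqrt (Rpower M (/ 2))) by (try lra; apply exp_pos).
    rewrite Rpower_mult. f_equal. field. }
  assert (Hs2 : 0 < sqrt 2) by (apply sqrt_lt_R0; lra).
  assert (HsM : 0 < sqrt M) by (apply sqrt_lt_R0; lra).
  assert (HssM : 0 < sqrt (sqrt M)) by (apply sqrt_lt_R0; lra).
  rewrite HM4, (sqrt_div_alt M 2) by lra.
  replace (960 / (sqrt M / sqrt 2)) with (960 * sqrt 2 / sqrt M) by (field; lra).
  rewrite (sqrt_div_alt _ (sqrt M)) by lra. field. lra.
Qed.

Lemma CTnorm_N0_le s M T w : 0 <= s -> 1 <= M -> 0 <= T -> in_CTl2s s T w ->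
  CTnorm s T (calN0 M w) <= sqrt (kernel_bound M) * CTnorm s T w ^ 3.
Proof.
  intros Hs HM HT Hw. apply CTnorm_le; auto. intros t Ht.
  eapply Rle_trans; [apply N0_l2s_bound_at; auto; apply (proj1 Hw); auto|].
  apply Rmult_le_compat_l; [apply sqrt_pos|]. apply pow_incr.
  split; [apply l2s_norm_nonneg | apply CTnorm_ge; auto].
Qed.

Lemma CTnorm_N0_sub_le s M T w wt : 0 <= s -> 1 <= M -> 0 <= T -> in_CTl2s s T w -> in_CTl2s s T wt ->
  CTnorm s T (fun t n => Csub (calN0 M w t n) (calN0 M wt t n))
  <= sqrt (kernel_bound M) * (2 * (CTnorm s T w ^ 2 + CTnorm s T wt ^ 2)
                              * CTnorm s T (fun t n => Csub (w t n) (wt t n))).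
Proof.
  intros Hs HM HT Hw Hwt. assert (Hd := in_CTl2s_sub s T w wt Hs Hw Hwt).
  apply CTnorm_le; auto. intros t Ht.
  eapply Rle_trans; [apply N0_sub_l2s_bound_at; auto; [apply (proj1 Hw) | apply (proj1 Hwt)]; auto|].
  apply Rmult_le_compat_l; [apply sqrt_pos|].
  pose proof (CTnorm_ge s T w t Hs Hw Ht). pose proof (CTnorm_ge s T wt t Hs Hwt Ht).
  pose proof (CTnorm_ge s T _ t Hs Hd Ht). cbv beta in *.
  pose proof (l2s_norm_nonneg s (w t)). pose proof (l2s_norm_nonneg s (wt t)).
  pose proof (l2s_norm_nonneg s (fun n => Csub (w t n) (wt t n))).
  assert (l2s_norm s (w t) ^ 2 <= CTnorm s T w ^ 2) by (apply pow_incr; lra).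
  assert (l2s_norm s (wt t) ^ 2 <= CTnorm s T wt ^ 2) by (apply pow_incr; lra).
  apply Rmult_le_compat; nra.
Qed.

Theorem lemma3p4 (s : R) (hs : 0 < s) :
  exists (delta K : R), 0 < delta /\
    forall (M T : R) (w wt : R -> Z -> Cx),
      1 <= M -> 0 < T -> in_CTl2s s T w -> in_CTl2s s T wt ->
      CTnorm s T (calN0 M w) <= K * Rpower M (- delta) * CTnorm s T w ^ 3 /\
      CTnorm s T (fun t n => Csub (calN0 M w t n) (calN0 M wt t n))
        <= K * Rpower M (- delta)
           * (CTnorm s T w ^ 2 + CTnorm s T wt ^ 2)
           * CTnorm s T (fun t n => Csub (w t n) (wt t n)).
Proof.
  exists (/ 4), (2 * sqrt (960 * sqrt 2)). split; [lra|].
  intros M T w wt HM HT Hw Hwt.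
  assert (Hs : 0 <= s) by lra.
  assert (Hk : 2 * sqrt (960 * sqrt 2) * Rpower M (- / 4) = 2 * sqrt (kernel_bound M))
    by (rewrite sqrt_kernel_bound; auto; ring).
  rewrite Hk. split.
  - eapply Rle_trans; [apply CTnorm_N0_le; auto; lra|].
    pose proof (sqrt_pos (kernel_bound M)).
    assert (0 <= CTnorm s T w ^ 3).
    { apply pow_le. eapply Rle_trans; [apply l2s_norm_nonneg | apply (CTnorm_ge s T w 0)]; auto; lra. }
    nra.
  - eapply Rle_trans; [apply CTnorm_N0_sub_le; auto; lra|]. right; ring.
Qed.
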